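(* Let $(b,c)$ be a connected canonically compactifiable weighted graph over $X$ and fix $o\in X$. Then $$\widetilde D_o=\{u\in\widetilde D:\ \hat u|_{\partial X}=0\}.$$
   Context: Let $X$ be a countably infinite set. A weighted graph $(b,c)$ over $X$ consists of a symmetric $b:X\times X\to[0,\infty)$ with $b(x,x)=0$ and $\sum_{y}b(x,y)<\infty$ for all $x$, and $c:X\to[0,\infty)$; connected means any two distinct vertices are joined by a finite path of pairwise distinct vertices with consecutive ones satisfying $b>0$. Let $\widetilde Q(f)=\frac12\sum_{x,y}b(x,y)|f(x)-f(y)|^2+\sum_x c(x)|f(x)|^2$, $\widetilde D=\{f:X\to\mathbb C:\widetilde Q(f)<\infty\}$, and for fixed $o\in X$, $\|f\|_o=(\widetilde Q(f)+|f(o)|^2)^{1/2}$ on $\widetilde D$. Let $C_c(X)$ be the finitely supported functions and $\widetilde D_o$ the closure of $C_c(X)$ in $\widetilde D$ with respect to $\|\cdot\|_o$. The graph is canonically compactifiable if $\widetilde D\subseteq\ell^\infty(X)$. In that case let $\mathcal A$ be the sup-norm closure of $\widetilde D$ in $\ell^\infty(X)$, $\mathcal A^+$ the smallest $C^*$-subalgebra of $\ell^\infty(X)$ containing $\mathcal A$ and $1$, $K$ the set of characters (nonzero multiplicative linear functionals) of $\mathcal A^+$ with the weak-$*$ topology (a compact Hausdorff space), and for $g\in\mathcal A^+$ let $\hat g:K\to\mathbb C$, $\hat g(\gamma)=\gamma(g)$. The map $x\mapsto\delta_x$, $\delta_x(f)=f(x)$, embeds $X$ into $K$; identifying $X$ with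 its image, set $\partial X=K\setminus X$. *)

From Stdlib Require Import Reals List ClassicalEpsilon.
Open Scope R_scope.
Set Implicit Arguments.

Definition Cplx := (R * R)%type.
Definition C0 : Cplx := (0, 0).
Definition C1 : Cplx := (1, 0).
Definition Cadd (z w : Cplx) : Cplx := (fst z + fst w, snd z + snd w).
Definition Copp (z : Cplx) : Cplx := (- fst z, - snd z).
Definition Csub (z w : Cplx) : Cplx := Cadd z (Copp w).
Definition Cmul (z w : Cplx) : Cplx :=
  (fst z * fst w - snd z * snd w, fst z * snd w + snd z * fst w).
Definition Cconj (z : Cplx) : Cplx := (fst z, - snd z).
Definition Cnorm2 (z : Cplx) : R := fst z * fst z + snd z * snd z.
Definition Cabs (z : Cplx) : R := sqrt (Cnorm2 z).

Fixpoint fsum {T : Type} (F : T -> R) (l : list T) : R :=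
  match l with nil => 0 | x :: l' => F x + fsum F l' end.

Definition psums {T : Type} (F : T -> R) : R -> Prop :=
  fun r => exists l : list T, NoDup l /\ r = fsum F l.

Lemma psums_nonempty {T : Type} (F : T -> R) : exists r, psums F r.
Proof. exists 0. exists nil. split; [constructor | reflexivity]. Qed.

(* a nonnegative family has finite sum iff its finite partial sums are bounded *)
Definition summable {T : Type} (F : T -> R) : Prop := bound (psums F).

(* the sum (supremum of finite partial sums); junk value 0 if not summable *)
Definition tsum {T : Type} (F : T -> R) : R :=
  match excluded_middle_informative (bound (psums F)) with
  | left H => proj1_sig (completeness (psums F) H (psums_nonempty F))
  | right _ => 0
  end.

Definition countably_infinite (X : Type) : Prop :=
  exists e : nat -> X, (forall n m, e n = e m -> n = m) /\ (forall x, exists n, e n = x).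

Definition weighted_graph {X : Type} (b : X -> X -> R) (c : X -> R) : Prop :=
  (forall x y, 0 <= b x y) /\ (forall x y, b x y = b y x) /\ (forall x, b x x = 0) /\
  (forall x, summable (b x)) /\ (forall x, 0 <= c x).

Fixpoint chain {X : Type} (b : X -> X -> R) (x : X) (l : list X) (y : X) : Prop :=
  match l with
  | nil => 0 < b x y
  | z :: l' => 0 < b x z /\ chain b z l' y
  end.

Definition connected {X : Type} (b : X -> X -> R) : Prop :=
  forall x y : X, x <> y ->
    exists l : list X, NoDup (x :: l ++ y :: nil) /\ chain b x l y.

Definition edge_term {X : Type} (b : X -> X -> R) (f : X -> Cplx) (p : X * X) : R :=
  b (fst p) (snd p) * Cnorm2 (Csub (f (fst p)) (f (snd p))).
Definition kill_term {X : Type} (c : X -> R) (f : X -> Cplx) (x : X) : R :=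
  c x * Cnorm2 (f x).

(* Q~(f) (meaningful when f is in D~) *)
Definition Qt {X : Type} (b : X -> X -> R) (c : X -> R) (f : X -> Cplx) : R :=
  / 2 * tsum (edge_term b f) + tsum (kill_term c f).

(* D~ = { f : Q~(f) < infinity } *)
Definition Dt {X : Type} (b : X -> X -> R) (c : X -> R) (f : X -> Cplx) : Prop :=
  summable (edge_term b f) /\ summable (kill_term c f).

Definition normo {X : Type} (b : X -> X -> R) (c : X -> R) (o : X) (f : X -> Cplx) : R :=
  sqrt (Qt b c f + Cnorm2 (f o)).

Definition fsub {X : Type} (f g : X -> Cplx) : X -> Cplx := fun x => Csub (f x) (g x).

Definition finitely_supported {X : Type} (f : X -> Cplx) : Prop :=
  exists l : list X, forall x, ~ In x l -> f x = C0.

(* D~_o = closure of C_c(X) in D~ w.r.t. ||.||_o *)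
Definition Dto {X : Type} (b : X -> X -> R) (c : X -> R) (o : X) (u : X -> Cplx) : Prop :=
  Dt b c u /\
  forall eps, 0 < eps ->
    exists phi, finitely_supported phi /\ normo b c o (fsub u phi) < eps.

Definition bounded {X : Type} (f : X -> Cplx) : Prop :=
  exists M, forall x, Cabs (f x) <= M.

Definition canonically_compactifiable {X : Type} (b : X -> X -> R) (c : X -> R) : Prop :=
  forall f, Dt b c f -> bounded f.

Definition sup_closure {X : Type} (S : (X -> Cplx) -> Prop) (g : X -> Cplx) : Prop :=
  bounded g /\
  forall eps, 0 < eps -> exists f, S f /\ forall x, Cabs (Csub (g x) (f x)) < eps.

(* A = sup-norm closure of D~ in l^infty *)
Definition Aalg {X : Type} (b : X -> X -> R) (c : X -> R) : (X -> Cplx) -> Prop :=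
  sup_closure (Dt b c).

Definition cstar_subalgebra {X : Type} (S : (X -> Cplx) -> Prop) : Prop :=
  (forall f, S f -> bounded f) /\
  S (fun _ => C0) /\
  (forall f g, S f -> S g -> S (fun x => Cadd (f x) (g x))) /\
  (forall (a : Cplx) f, S f -> S (fun x => Cmul a (f x))) /\
  (forall f g, S f -> S g -> S (fun x => Cmul (f x) (g x))) /\
  (forall f, S f -> S (fun x => Cconj (f x))) /\
  (forall g, sup_closure S g -> S g).

(* A^+ = smallest Cplx*-subalgebra of l^infty containing A and 1 *)
Definition Aplus {X : Type} (b : X -> X -> R) (c : X -> R) (g : X -> Cplx) : Prop :=
  forall S : (X -> Cplx) -> Prop,
    cstar_subalgebra S -> (forall f, Aalg b c f -> S f) -> S (fun _ => C1) -> S g.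

Definition is_character {X : Type} (S : (X -> Cplx) -> Prop) (gam : (X -> Cplx) -> Cplx) : Prop :=
  (forall f g, S f -> S g -> gam (fun x => Cadd (f x) (g x)) = Cadd (gam f) (gam g)) /\
  (forall (a : Cplx) f, S f -> gam (fun x => Cmul a (f x)) = Cmul a (gam f)) /\
  (forall f g, S f -> S g -> gam (fun x => Cmul (f x) (g x)) = Cmul (gam f) (gam g)) /\
  (exists f, S f /\ gam f <> C0).

Definition delta {X : Type} (x : X) : (X -> Cplx) -> Cplx := fun f => f x.

Definition same_on {X : Type} (S : (X -> Cplx) -> Prop) (g1 g2 : (X -> Cplx) -> Cplx) : Prop :=
  forall f, S f -> g1 f = g2 f.

(* gam is in the boundary dX = K \ X *)
Definition in_boundary {X : Type} (b : X -> X -> R) (c : X -> R) (gam : (X -> Cplx) -> Cplx) : Prop :=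
  is_character (Aplus b c) gam /\ forall x : X, ~ same_on (Aplus b c) gam (delta x).

Definition hat {X : Type} (u : X -> Cplx) (gam : (X -> Cplx) -> Cplx) : Cplx := gam u.

(* The proof factors through the space c_0(X) of functions vanishing at
   infinity (|u| <= e outside a finite set, for every e > 0):

   (I)  D~_o = D~ ∩ c_0.  Canonical compactifiability makes the inclusion
        D~ -> l^oo bounded for ||.||_o (a series of normalized bumps would
        otherwise produce an unbounded function of finite energy), so limits of
        finitely supported functions vanish at infinity.  Conversely, clamping
        u at height e costs little energy, and u minus its clamp is finitely
        supported when u is in c_0.
   (II) For u in A^+, u is in c_0 iff every boundary character kills u.
        Characters are contractive for the sup norm (Neumann series) and
        boundary characters kill the indicators 1_x, hence all of c_0 ∩ A^+.
        Conversely, if |u(x_n)| > e along an injective sequence, an ultralimit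
        along a free ultrafilter on nat is a boundary character with
        gamma(u) <> 0. *)
From Stdlib Require Import Reals List Lra Lia Psatz ClassicalEpsilon Classical FunctionalExtensionality.
From mathcomp Require ssreflect ssrbool ssrnat classical_sets filter.
Set Bullet Behavior "Strict Subproofs".
Open Scope R_scope.

(** * Complex numbers *)

Lemma Cnorm2_nonneg z : 0 <= Cnorm2 z.
Proof. unfold Cnorm2; nra. Qed.

Lemma Cabs_nonneg z : 0 <= Cabs z.
Proof. apply sqrt_pos. Qed.

Lemma Cabs_sq z : Cabs z * Cabs z = Cnorm2 z.
Proof. apply sqrt_sqrt, Cnorm2_nonneg. Qed.

Lemma sq_le_le a b : 0 <= b -> a * a <= b * b -> a <= b.
Proof. intros; nra. Qed.

Lemma Cabs_le z B : 0 <= B -> Cnorm2 z <= B * B -> Cabs z <= B.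
Proof. intros HB H. apply sq_le_le; auto. rewrite Cabs_sq; auto. Qed.

Lemma Cnorm2_mul z w : Cnorm2 (Cmul z w) = Cnorm2 z * Cnorm2 w.
Proof. destruct z, w; unfold Cnorm2, Cmul; simpl; ring. Qed.

Lemma Cabs_mul z w : Cabs (Cmul z w) = Cabs z * Cabs w.
Proof. unfold Cabs. rewrite Cnorm2_mul. apply sqrt_mult; apply Cnorm2_nonneg. Qed.

Lemma Cdot_le z w : fst z * fst w + snd z * snd w <= Cabs z * Cabs w.
Proof.
  apply sq_le_le. pose proof (Cabs_nonneg z); pose proof (Cabs_nonneg w); nra.
  replace (Cabs z * Cabs w * (Cabs z * Cabs w)) with ((Cabs z * Cabs z) * (Cabs w * Cabs w)) by ring.
  rewrite !Cabs_sq. destruct z as [a b], w as [c d]; unfold Cnorm2; simpl.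
  pose proof (Rle_0_sqr (a*d - b*c)). unfold Rsqr in *. nra.
Qed.

Lemma Cabs_add z w : Cabs (Cadd z w) <= Cabs z + Cabs w.
Proof.
  apply Cabs_le. pose proof (Cabs_nonneg z); pose proof (Cabs_nonneg w); lra.
  pose proof (Cdot_le z w). pose proof (Cabs_sq z). pose proof (Cabs_sq w).
  destruct z, w; unfold Cnorm2, Cadd in *; simpl in *. nra.
Qed.

Lemma Cabs_C0 : Cabs C0 = 0.
Proof. unfold Cabs, Cnorm2, C0; simpl. replace (0*0+0*0) with 0 by ring. apply sqrt_0. Qed.

Lemma Cabs_C1 : Cabs C1 = 1.
Proof. unfold Cabs, Cnorm2, C1; simpl. replace (1*1+0*0) with 1 by ring. apply sqrt_1. Qed.

Lemma Cabs_conj z : Cabs (Cconj z) = Cabs z.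
Proof. unfold Cabs, Cnorm2, Cconj; simpl. f_equal. ring. Qed.

Lemma Cabs_rev_tri z w : Cabs z - Cabs w <= Cabs (Csub z w).
Proof.
  assert (E : z = Cadd (Csub z w) w) by (destruct z, w; unfold Cadd, Csub, Copp; simpl; f_equal; ring).
  pose proof (Cabs_add (Csub z w) w) as H. rewrite <- E in H. lra.
Qed.

Lemma sq_abs_le a b : Rabs a <= Rabs b -> a * a <= b * b.
Proof.
  intros H. pose proof (Rabs_pos a).
  assert (a * a = Rabs a * Rabs a) by (rewrite <- Rabs_mult; symmetry; apply Rabs_right; nra).
  assert (b * b = Rabs b * Rabs b) by (rewrite <- Rabs_mult; symmetry; apply Rabs_right; nra).
  nra.
Qed.

Lemma fst_le_Cabs z : Rabs (fst z) <= Cabs z.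
Proof.
  apply sq_le_le. apply Cabs_nonneg. rewrite Cabs_sq. destruct z; unfold Cnorm2; simpl.
  rewrite <- Rabs_mult. rewrite Rabs_right by nra. nra.
Qed.

Lemma snd_le_Cabs z : Rabs (snd z) <= Cabs z.
Proof.
  apply sq_le_le. apply Cabs_nonneg. rewrite Cabs_sq. destruct z; unfold Cnorm2; simpl.
  rewrite <- Rabs_mult. rewrite Rabs_right by nra. nra.
Qed.

Lemma Cabs_le_sum z : Cabs z <= Rabs (fst z) + Rabs (snd z).
Proof.
  apply Cabs_le. pose proof (Rabs_pos (fst z)); pose proof (Rabs_pos (snd z)); lra.
  destruct z as [a b]; unfold Cnorm2; simpl.
  pose proof (Rabs_pos a); pose proof (Rabs_pos b).
  pose proof (sq_abs_le a (Rabs a) ltac:(rewrite Rabs_Rabsolu; lra)).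
  pose proof (sq_abs_le b (Rabs b) ltac:(rewrite Rabs_Rabsolu; lra)).
  nra.
Qed.

Lemma Cnorm2_sub_le z w : Cnorm2 (Csub z w) <= 2 * Cnorm2 z + 2 * Cnorm2 w.
Proof. destruct z as [a b], w as [c d]; unfold Cnorm2, Csub, Cadd, Copp; simpl.
  pose proof (Rle_0_sqr (a+c)); pose proof (Rle_0_sqr (b+d)); unfold Rsqr in *; nra. Qed.

Lemma Cnorm2_add_le z w : Cnorm2 (Cadd z w) <= 2 * Cnorm2 z + 2 * Cnorm2 w.
Proof. destruct z as [a b], w as [c d]; unfold Cnorm2, Cadd; simpl.
  pose proof (Rle_0_sqr (a-c)); pose proof (Rle_0_sqr (b-d)); unfold Rsqr in *; nra. Qed.

Lemma Cnorm2_re a : Cnorm2 (a, 0) = a * a.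
Proof. unfold Cnorm2; simpl; ring. Qed.

Lemma Cabs_re a : Cabs (a, 0) = Rabs a.
Proof. unfold Cabs. rewrite Cnorm2_re. apply sqrt_Rsqr_abs. Qed.

Lemma Cnorm2_pos z : z <> C0 -> 0 < Cnorm2 z.
Proof.
  intros H. destruct z as [a b]; unfold Cnorm2; simpl.
  destruct (Req_dec a 0), (Req_dec b 0); subst; try nra. exfalso; apply H; reflexivity.
Qed.

Lemma Cabs0_eq z : Cabs z = 0 -> z = C0.
Proof.
  intros H. destruct (classic (z = C0)) as [|Hn]; auto.
  pose proof (Cnorm2_pos _ Hn). rewrite <- Cabs_sq, H in H0. lra.
Qed.

Lemma Ceq (z w : Cplx) : fst z = fst w -> snd z = snd w -> z = w.
Proof. destruct z, w; simpl; intros; subst; auto. Qed.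

Ltac cring := apply Ceq; unfold Cadd, Cmul, Csub, Copp, C0, C1, Cconj; simpl; ring.

Definition Cinv (z : Cplx) : Cplx := (fst z / Cnorm2 z, - snd z / Cnorm2 z).

Lemma Cinv_l z : z <> C0 -> Cmul (Cinv z) z = C1.
Proof.
  intros H. pose proof (Cnorm2_pos _ H). destruct z as [a b].
  unfold Cinv, Cmul, C1, Cnorm2 in *; simpl in *. f_equal; field; lra.
Qed.

Lemma Cidem z : Cmul z z = z -> z = C0 \/ z = C1.
Proof.
  intros H. destruct z as [a b]. unfold Cmul, C0, C1 in *; simpl in *.
  injection H; intros H1 H2.
  assert (b = 0) by nra. subst. assert (a = 0 \/ a = 1) by nra.
  destruct H0; subst; [left|right]; reflexivity.
Qed.

(** * Finite sums and unordered sums of nonnegative families *)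

Section Sums.
Context {T : Type}.
Implicit Types F G : T -> R.

Lemma fsum_app F l1 l2 : fsum F (l1 ++ l2) = fsum F l1 + fsum F l2.
Proof. induction l1; simpl; [ring| rewrite IHl1; ring]. Qed.

Lemma fsum_nonneg F l : (forall x, 0 <= F x) -> 0 <= fsum F l.
Proof. intros H; induction l; simpl; [lra| pose proof (H a); lra]. Qed.

Lemma fsum_le F G l : (forall x, F x <= G x) -> fsum F l <= fsum G l.
Proof. intros H; induction l; simpl; [lra| pose proof (H a); lra]. Qed.

Lemma fsum_scal c F l : fsum (fun x => c * F x) l = c * fsum F l.
Proof. induction l; simpl; [ring| rewrite IHl; ring]. Qed.

Lemma fsum_zero F l : (forall x, In x l -> F x = 0) -> fsum F l = 0.
Proof. induction l; simpl; intros H; auto. rewrite H, IHl; auto. ring. Qed.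

Lemma fsum_incl F l1 l2 : (forall x, 0 <= F x) -> NoDup l1 -> incl l1 l2 ->
  fsum F l1 <= fsum F l2.
Proof.
  intros Hp Hnd. revert l2. induction Hnd as [|a l1 Ha Hnd IH]; intros l2 Hi.
  - simpl. apply fsum_nonneg; auto.
  - assert (Hin : In a l2) by (apply Hi; left; auto).
    destruct (in_split _ _ Hin) as [p [s ->]].
    rewrite fsum_app. simpl.
    assert (Hsub : incl l1 (p ++ s)).
    { intros y Hy. assert (Hy' : In y (p ++ a :: s)) by (apply Hi; right; auto).
      apply in_app_or in Hy'. apply in_or_app. destruct Hy' as [|[|]]; auto.
      subst; contradiction. }
    specialize (IH _ Hsub). rewrite fsum_app in IH. simpl. lra.
Qed.

Lemma fsum_filter F (P : T -> bool) l :
  fsum F l = fsum F (filter P l) + fsum F (filter (fun x => negb (P x)) l).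
Proof. induction l; simpl; [ring|]. destruct (P a); simpl; rewrite IHl; ring. Qed.

Lemma tsum_spec F : summable F ->
  (forall l, NoDup l -> fsum F l <= tsum F) /\
  (forall B, (forall l, NoDup l -> fsum F l <= B) -> tsum F <= B).
Proof.
  intros Hs. unfold tsum. destruct (excluded_middle_informative (bound (psums F))) as [H|H];
    [|contradiction].
  destruct (completeness (psums F) H (psums_nonempty F)) as [m [Hub Hlub]]. simpl.
  split.
  - intros l Hl. apply Hub. exists l; split; auto.
  - intros B HB. apply Hlub. intros r [l [Hl ->]]. apply HB; auto.
Qed.

Lemma tsum_ub F l : summable F -> NoDup l -> fsum F l <= tsum F.
Proof. intros Hs; apply (tsum_spec F Hs). Qed.

Lemma summable_intro F B : (forall l, NoDup l -> fsum F l <= B) -> summable F.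
Proof. intros H. exists B. intros r [l [Hl ->]]. auto. Qed.

Lemma summable_bound F B : (forall l, NoDup l -> fsum F l <= B) -> summable F /\ tsum F <= B.
Proof.
  intros H. assert (Hs : summable F) by (eapply summable_intro; eauto).
  split; auto. apply (tsum_spec F Hs); auto.
Qed.

Lemma tsum_nonneg F : (forall x, 0 <= F x) -> 0 <= tsum F.
Proof.
  intros H. unfold tsum. destruct (excluded_middle_informative (bound (psums F))) as [Hb|Hb]; [|lra].
  destruct (completeness (psums F) Hb (psums_nonempty F)) as [m [Hub Hlub]]. simpl.
  apply Hub. exists nil. split; [constructor|reflexivity].
Qed.

Lemma tsum_approx F d : summable F -> 0 < d -> exists l, NoDup l /\ tsum F - d < fsum F l.
Proof.
  intros Hs Hd. apply NNPP; intros Hn.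
  assert (tsum F <= tsum F - d); [|lra].
  apply (tsum_spec F Hs). intros l Hl. apply Rnot_lt_le. intros Hc. apply Hn. exists l; auto.
Qed.

Lemma summable_mono F G : (forall x, F x <= G x) -> summable G -> summable F /\ tsum F <= tsum G.
Proof.
  intros H Hs. apply summable_bound. intros l Hl.
  eapply Rle_trans; [apply fsum_le; eauto| apply tsum_ub; auto].
Qed.

Lemma summable_add F G : summable F -> summable G ->
  summable (fun x => F x + G x) /\ tsum (fun x => F x + G x) <= tsum F + tsum G.
Proof.
  intros sF sG. apply summable_bound. intros l Hl.
  replace (fsum (fun x => F x + G x) l) with (fsum F l + fsum G l)
    by (clear Hl; induction l; simpl; [ring| rewrite <- IHl; ring]).
  pose proof (tsum_ub F l sF Hl); pose proof (tsum_ub G l sG Hl); lra.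
Qed.

Lemma summable_scal c F : 0 <= c -> summable F ->
  summable (fun x => c * F x) /\ tsum (fun x => c * F x) <= c * tsum F.
Proof.
  intros Hc sF. apply summable_bound. intros l Hl. rewrite fsum_scal.
  pose proof (tsum_ub F l sF Hl). nra.
Qed.

Definition inb (l : list T) (x : T) : bool :=
  if excluded_middle_informative (In x l) then true else false.

Lemma inb_spec l x : inb l x = true <-> In x l.
Proof. unfold inb. destruct (excluded_middle_informative (In x l)); split; intros; auto; congruence. Qed.

Lemma dominated_tail G d : (forall x, 0 <= G x) -> summable G -> 0 < d ->
  exists l0, forall F, (forall x, 0 <= F x <= G x) ->
    summable F /\ tsum F <= fsum F l0 + d.
Proof.
  intros HG sG Hd. destruct (tsum_approx G d sG Hd) as [l0 [Hnd Hl0]].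
  exists l0. intros F HF. apply summable_bound. intros L HL.
  rewrite (fsum_filter F (inb l0) L).
  assert (Hin : fsum F (filter (inb l0) L) <= fsum F l0).
  { apply fsum_incl. intros; apply HF. apply NoDup_filter; auto.
    intros y Hy. apply filter_In in Hy. apply inb_spec; tauto. }
  set (L2 := filter (fun x => negb (inb l0 x)) L).
  assert (HFG : fsum F L2 <= fsum G L2) by (apply fsum_le; intros; apply HF).
  assert (Hout : fsum G (L2 ++ l0) <= tsum G).
  { apply tsum_ub; auto. apply NoDup_app; auto. apply NoDup_filter; auto.
    intros a Ha Hb. unfold L2 in Ha. apply filter_In in Ha. destruct Ha as [_ Ha].
    apply (proj2 (inb_spec l0 a)) in Hb. rewrite Hb in Ha. discriminate. }
  rewrite fsum_app in Hout. lra.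
Qed.

End Sums.

Lemma summable_comp_inj {T U : Type} (F : U -> R) (g : T -> U) :
  (forall x y, g x = g y -> x = y) -> summable F -> summable (fun x => F (g x)).
Proof.
  intros Hi sF. apply summable_intro with (tsum F). intros l Hl.
  replace (fsum (fun x => F (g x)) l) with (fsum F (map g l))
    by (clear Hl; induction l; simpl; [reflexivity| rewrite IHl; reflexivity]).
  apply tsum_ub; auto. apply NoDup_map_NoDup_ForallPairs; auto.
  intros a b' _ _; apply Hi.
Qed.

Fixpoint sumN (a : nat -> R) (N : nat) : R :=
  match N with O => 0 | S n => sumN a n + a n end.

Lemma sumN_scal k a N : sumN (fun n => k * a n) N = k * sumN a N.
Proof. induction N; simpl; [ring| rewrite IHN; ring]. Qed.
Lemma sumN_le a b N : (forall n, a n <= b n) -> sumN a N <= sumN b N.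
Proof. intros H; induction N; simpl; [lra| specialize (H N); lra]. Qed.
Lemma sumN_nonneg a N : (forall n, 0 <= a n) -> 0 <= sumN a N.
Proof. intros H; induction N; simpl; [lra| specialize (H N); lra]. Qed.
Lemma sumN_ext a b N : (forall n, a n = b n) -> sumN a N = sumN b N.
Proof. intros H; induction N; simpl; auto. rewrite IHN, H; auto. Qed.
Lemma sumN_plus a b N : sumN (fun n => a n + b n) N = sumN a N + sumN b N.
Proof. induction N; simpl; [ring| rewrite IHN; ring]. Qed.
Lemma sumN_minus a a' N : sumN a N - sumN a' N = sumN (fun n => a n - a' n) N.
Proof. induction N; simpl; [ring| rewrite <- IHN; ring]. Qed.

Lemma tsum_dominated {T : Type} (G : nat -> T -> R) (H : T -> R) N :
  (forall n, summable (G n)) -> (forall n p, 0 <= G n p) ->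
  (forall p, H p <= sumN (fun n => G n p) N) ->
  summable H /\ tsum H <= sumN (fun n => tsum (G n)) N.
Proof.
  intros Hs Hp HH.
  assert (Hsum : summable (fun p => sumN (fun n => G n p) N) /\
    tsum (fun p => sumN (fun n => G n p) N) <= sumN (fun n => tsum (G n)) N).
  { clear HH. induction N; simpl.
    - apply summable_bound. intros l _. rewrite fsum_zero; auto. lra.
    - destruct IHN as [s1 t1].
      destruct (summable_add _ (G N) s1 (Hs N)) as [s2 t2]. split; auto. lra. }
  destruct (summable_mono H _ HH (proj1 Hsum)). split; auto. lra.
Qed.

Lemma geom_sum N : sumN (fun n => / 2 ^ (S n)) N = 1 - / 2 ^ N.
Proof.
  induction N; cbn [sumN]. simpl; field. rewrite IHN. simpl. field. apply pow_nonzero. lra.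
Qed.

(* Weighted Cauchy-Schwarz step behind [sq_sumN]. *)
Lemma weighted_square_step W w S A a : 0 <= W -> 0 < w -> 0 <= S -> A * A <= W * S ->
  (A + a) * (A + a) <= (W + w) * (S + a * a / w).
Proof.
  intros HW Hw HS HA.
  assert (Ex : exists t, a = w * t) by (exists (a / w); field; lra).
  destruct Ex as [t H].
  replace (a * a / w) with (w * t * t) by (rewrite H; field; lra). rewrite H.
  destruct (Req_dec W 0) as [E|E].
  - subst W. assert (A = 0) by nra. subst. nra.
  - assert (HW' : 0 < W) by lra.
    assert (W * (2 * A * t) <= W * (W * t * t + S)).
    { pose proof (Rle_0_sqr (W * t - A)). unfold Rsqr in H0. nra. }
    assert (2 * A * t <= W * t * t + S) by (apply (Rmult_le_reg_l W); lra).
    nra.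
Qed.

(* (sum_n a_n)^2 <= sum_n 2^(n+1) a_n^2: Cauchy-Schwarz with weights 2^-(n+1). *)
Lemma sq_sumN (a : nat -> R) N :
  sumN a N * sumN a N <= sumN (fun n => 2 ^ (S n) * (a n * a n)) N.
Proof.
  assert (Hw : sumN a N * sumN a N <= (1 - / 2 ^ N) * sumN (fun n => 2 ^ (S n) * (a n * a n)) N).
  { induction N; cbn [sumN]. simpl; lra.
    assert (H2 : 0 < 2 ^ N) by (apply pow_lt; lra).
    replace (1 - / 2 ^ S N) with ((1 - / 2 ^ N) + / (2 ^ S N)) by (simpl; field; lra).
    replace (2 ^ S N * (a N * a N)) with (a N * a N / / (2 ^ S N)) by (simpl; field; lra).
    apply weighted_square_step; auto.
    - assert (/ 2 ^ N <= 1). { rewrite <- Rinv_1. apply Rinv_le_contravar; [lra|]. apply pow_R1_Rle; lra. } lra.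
    - apply Rinv_0_lt_compat; simpl; lra.
    - apply sumN_nonneg; intros n. pose proof (pow_lt 2 (S n)). nra. }
  assert (0 <= sumN (fun n => 2 ^ (S n) * (a n * a n)) N).
  { apply sumN_nonneg; intros n. pose proof (pow_lt 2 (S n)). nra. }
  assert (0 < / 2 ^ N) by (apply Rinv_0_lt_compat, pow_lt; lra). nra.
Qed.

(** * The energy form *)

Section Energy.
Context {X : Type} (b : X -> X -> R) (c : X -> R) (Hw : weighted_graph b c).

Lemma b_nonneg x y : 0 <= b x y.
Proof. destruct Hw as [H _]; auto. Qed.
Lemma b_sym x y : b x y = b y x.
Proof. destruct Hw as [_ [H _]]; auto. Qed.
Lemma b_summable x : summable (b x).
Proof. destruct Hw as [_ [_ [_ [H _]]]]; auto. Qed.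
Lemma c_nonneg x : 0 <= c x.
Proof. destruct Hw as [_ [_ [_ [_ H]]]]; auto. Qed.

Lemma edge_nonneg f p : 0 <= edge_term b f p.
Proof. unfold edge_term. pose proof (b_nonneg (fst p) (snd p)). pose proof (Cnorm2_nonneg (Csub (f (fst p)) (f (snd p)))). nra. Qed.
Lemma kill_nonneg f x : 0 <= kill_term c f x.
Proof. unfold kill_term. pose proof (c_nonneg x). pose proof (Cnorm2_nonneg (f x)). nra. Qed.

Lemma Qt_nonneg f : 0 <= Qt b c f.
Proof. unfold Qt. pose proof (tsum_nonneg _ (edge_nonneg f)). pose proof (tsum_nonneg _ (kill_nonneg f)). lra. Qed.

Lemma normo_nonneg o f : 0 <= normo b c o f.
Proof. apply sqrt_pos. Qed.

Lemma normo_sq o f : normo b c o f * normo b c o f = Qt b c f + Cnorm2 (f o).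
Proof. unfold normo. apply sqrt_sqrt. pose proof (Qt_nonneg f); pose proof (Cnorm2_nonneg (f o)); lra. Qed.

Lemma energy_domination (F : nat -> X -> Cplx) (w : nat -> R) M h :
  (forall n, 0 <= w n) -> (forall n, Dt b c (F n)) ->
  (forall x y, Cnorm2 (Csub (h x) (h y)) <= sumN (fun n => w n * Cnorm2 (Csub (F n x) (F n y))) M) ->
  (forall x, Cnorm2 (h x) <= sumN (fun n => w n * Cnorm2 (F n x)) M) ->
  Dt b c h /\ Qt b c h <= sumN (fun n => w n * Qt b c (F n)) M.
Proof.
  intros Hw0 DF Hd Hv.
  destruct (tsum_dominated (fun n p => w n * edge_term b (F n) p) (edge_term b h) M) as [sE tE].
  - intros n; apply summable_scal; [apply Hw0| apply DF].
  - intros n p; pose proof (Hw0 n); pose proof (edge_nonneg (F n) p); nra.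
  - intros p. unfold edge_term.
    eapply Rle_trans; [apply Rmult_le_compat_l; [apply b_nonneg| apply Hd]|].
    rewrite <- sumN_scal. apply Req_le, sumN_ext; intros; ring.
  - destruct (tsum_dominated (fun n p => w n * kill_term c (F n) p) (kill_term c h) M) as [sK tK].
    + intros n; apply summable_scal; [apply Hw0| apply DF].
    + intros n p; pose proof (Hw0 n); pose proof (kill_nonneg (F n) p); nra.
    + intros p. unfold kill_term.
      eapply Rle_trans; [apply Rmult_le_compat_l; [apply c_nonneg| apply Hv]|].
      rewrite <- sumN_scal. apply Req_le, sumN_ext; intros; ring.
    + assert (HE : sumN (fun n => tsum (fun p => w n * edge_term b (F n) p)) M
                   <= sumN (fun n => w n * tsum (edge_term b (F n))) M)
        by (apply sumN_le; intros n; apply summable_scal; [apply Hw0| apply DF]).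
      assert (HK : sumN (fun n => tsum (fun p => w n * kill_term c (F n) p)) M
                   <= sumN (fun n => w n * tsum (kill_term c (F n))) M)
        by (apply sumN_le; intros n; apply summable_scal; [apply Hw0| apply DF]).
      split; [split; assumption|].
      replace (sumN (fun n => w n * Qt b c (F n)) M) with
        (/ 2 * sumN (fun n => w n * tsum (edge_term b (F n))) M + sumN (fun n => w n * tsum (kill_term c (F n))) M)
        by (rewrite <- sumN_scal, <- sumN_plus; apply sumN_ext; intros n; unfold Qt; ring).
      unfold Qt. lra.
Qed.

Lemma normo_domination o (F : nat -> X -> Cplx) (w : nat -> R) M h :
  (forall n, 0 <= w n) -> (forall n, Dt b c (F n)) ->
  (forall x y, Cnorm2 (Csub (h x) (h y)) <= sumN (fun n => w n * Cnorm2 (Csub (F n x) (F n y))) M) ->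
  (forall x, Cnorm2 (h x) <= sumN (fun n => w n * Cnorm2 (F n x)) M) ->
  Dt b c h /\
  normo b c o h * normo b c o h <= sumN (fun n => w n * (normo b c o (F n) * normo b c o (F n))) M.
Proof.
  intros Hw0 DF Hd Hv. destruct (energy_domination F w M h Hw0 DF Hd Hv) as [Dh Qh].
  split; auto. rewrite normo_sq.
  replace (sumN (fun n => w n * (normo b c o (F n) * normo b c o (F n))) M) with
    (sumN (fun n => w n * Qt b c (F n)) M + sumN (fun n => w n * Cnorm2 (F n o)) M)
    by (rewrite <- sumN_plus; apply sumN_ext; intros n; rewrite normo_sq; ring).
  specialize (Hv o). lra.
Qed.

Lemma Dt_dominated2 f g h : Dt b c f -> Dt b c g ->
  (forall x y, Cnorm2 (Csub (h x) (h y)) <= 2 * Cnorm2 (Csub (f x) (f y)) + 2 * Cnorm2 (Csub (g x) (g y))) ->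
  (forall x, Cnorm2 (h x) <= 2 * Cnorm2 (f x) + 2 * Cnorm2 (g x)) ->
  Dt b c h.
Proof.
  intros Df Dg Hd Hv.
  apply (energy_domination (fun n => match n with O => f | _ => g end) (fun _ => 2) 2 h).
  - intros; lra.
  - intros [|n]; auto.
  - intros x y. simpl. specialize (Hd x y). lra.
  - intros x. simpl. specialize (Hv x). lra.
Qed.

Lemma Dt_add f g : Dt b c f -> Dt b c g -> Dt b c (fun x => Cadd (f x) (g x)).
Proof.
  intros Df Dg. apply (Dt_dominated2 f g); auto.
  - intros x y. replace (Csub (Cadd (f x) (g x)) (Cadd (f y) (g y)))
      with (Cadd (Csub (f x) (f y)) (Csub (g x) (g y))) by cring.
    apply Cnorm2_add_le.
  - intros; apply Cnorm2_add_le.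
Qed.

Lemma Dt_sub f g : Dt b c f -> Dt b c g -> Dt b c (fsub f g).
Proof.
  intros Df Dg. apply (Dt_dominated2 f g); auto.
  - intros x y. unfold fsub. replace (Csub (Csub (f x) (g x)) (Csub (f y) (g y)))
      with (Csub (Csub (f x) (f y)) (Csub (g x) (g y))) by cring.
    apply Cnorm2_sub_le.
  - intros; apply Cnorm2_sub_le.
Qed.

Lemma Dt_scal a f : Dt b c f -> Dt b c (fun x => Cmul a (f x)).
Proof.
  intros Df. apply (energy_domination (fun _ => f) (fun _ => Cnorm2 a) 1).
  - intros; apply Cnorm2_nonneg.
  - auto.
  - intros x y. simpl. replace (Csub (Cmul a (f x)) (Cmul a (f y))) with (Cmul a (Csub (f x) (f y))) by cring.
    rewrite Cnorm2_mul. lra.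
  - intros x. simpl. rewrite Cnorm2_mul. lra.
Qed.

Lemma Dt_zero : Dt b c (fun _ => C0).
Proof.
  split; apply summable_intro with 0; intros l _; apply Req_le; apply fsum_zero; intros;
   unfold edge_term, kill_term, C0, Csub, Cadd, Copp, Cnorm2; simpl; ring.
Qed.

(* The normalized modulus t|f| is a nonnegative real function in D~ with
   ||t|f| ||_o <= t ||f||_o (contractions do not increase the energy). *)
Lemma normo_scaled_modulus o t f : 0 <= t -> Dt b c f ->
  Dt b c (fun x => (t * Cabs (f x), 0)) /\
  normo b c o (fun x => (t * Cabs (f x), 0)) <= t * normo b c o f.
Proof.
  intros Ht Df.
  destruct (normo_domination o (fun _ => f) (fun _ => t * t) 1 (fun x => (t * Cabs (f x), 0)))
    as [Dh Nh]; auto.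
  - intros; nra.
  - intros x y. simpl. rewrite Rplus_0_l.
    replace (Csub (t * Cabs (f x), 0) (t * Cabs (f y), 0)) with (t * (Cabs (f x) - Cabs (f y)), 0)
      by (unfold Csub, Cadd, Copp; simpl; f_equal; ring).
    rewrite Cnorm2_re, <- Cabs_sq.
    pose proof (Cabs_rev_tri (f x) (f y)). pose proof (Cabs_rev_tri (f y) (f x)).
    assert (Cabs (Csub (f y) (f x)) = Cabs (Csub (f x) (f y))).
    { unfold Cabs, Cnorm2, Csub, Cadd, Copp; simpl; f_equal; ring. }
    pose proof (Cabs_nonneg (Csub (f x) (f y))).
    assert ((Cabs (f x) - Cabs (f y)) * (Cabs (f x) - Cabs (f y))
            <= Cabs (Csub (f x) (f y)) * Cabs (Csub (f x) (f y))) by nra.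
    nra.
  - intros x. simpl. rewrite Cnorm2_re, <- Cabs_sq. nra.
  - split; auto. simpl in Nh. apply sq_le_le.
    + pose proof (normo_nonneg o f). nra.
    + lra.
Qed.

End Energy.

(** * Finitely supported functions *)

Definition ind {X : Type} (x : X) : X -> Cplx :=
  fun y => if excluded_middle_informative (y = x) then C1 else C0.

Lemma finsupp_ind {X : Type} (P : (X -> Cplx) -> Prop) :
  P (fun _ => C0) ->
  (forall f g, P f -> P g -> P (fun x => Cadd (f x) (g x))) ->
  (forall a f, P f -> P (fun x => Cmul a (f x))) ->
  (forall x, P (ind x)) ->
  forall phi, finitely_supported phi -> P phi.
Proof.
  intros H0 Hadd Hsc Hind phi [l Hl]. revert phi Hl. induction l as [|a l IH]; intros phi Hl.
  - replace phi with (fun _ : X => C0); auto. extensionality y. symmetry; apply Hl; auto.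
  - set (phi' := fun y => if excluded_middle_informative (y = a) then C0 else phi y).
    assert (P phi').
    { apply IH. intros y Hy. unfold phi'. destruct (excluded_middle_informative (y = a)); auto.
      apply Hl. intros [|]; auto. }
    replace phi with (fun y => Cadd (Cmul (phi a) (ind a y)) (phi' y)); auto.
    extensionality y. unfold phi', ind. destruct (excluded_middle_informative (y = a)).
    + subst. cring.
    + cring.
Qed.

Section Indicators.
Context {X : Type} (b : X -> X -> R) (c : X -> R) (Hw : weighted_graph b c).

(* The row of b at x, as a family over edges: its sum is the degree of x. *)
Definition rowf (x : X) (p : X * X) : R :=
  if excluded_middle_informative (fst p = x) then b x (snd p) else 0.

Lemma rowf_summable x : summable (rowf x).
Proof.
  destruct (b_summable b c Hw x) as [B HB].
  apply summable_intro with B. intros L HL.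
  assert (exists ys, NoDup ys /\ (forall y, In y ys -> In (x, y) L) /\ fsum (rowf x) L = fsum (b x) ys)
    as [ys [Hys [_ ->]]].
  { induction HL as [|a L Ha HL IH].
    - exists nil. simpl. split; [constructor|split; auto; tauto].
    - destruct IH as [ys [Hys [Hin Heq]]]. simpl. unfold rowf at 1.
      destruct (excluded_middle_informative (fst a = x)) as [e|e].
      + exists (snd a :: ys). split; [|split].
        * constructor; auto. intros Hy. apply Hin in Hy. apply Ha.
          replace a with (x, snd a); auto. destruct a; simpl in *; subst; auto.
        * intros y [<-|Hy]; [left; destruct a; simpl in *; subst; auto| right; auto].
        * simpl. rewrite Heq. auto.
      + exists ys. split; [auto|split]. intros y Hy; right; auto. rewrite Heq; ring. }
  apply HB. exists ys; auto.
Qed.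

Lemma point_summable (x : X) (a : R) : 0 <= a ->
  summable (fun y => if excluded_middle_informative (y = x) then a else 0).
Proof.
  intros Ha. apply summable_intro with a. intros L HL. induction HL as [|z L Hz HL IH]; simpl; [lra|].
  destruct (excluded_middle_informative (z = x)).
  - subst. rewrite fsum_zero; [lra|]. intros y Hy. destruct (excluded_middle_informative (y = x)); auto.
    subst; contradiction.
  - lra.
Qed.

(* The energy of 1_x is (up to the factor 1/2) deg(x) + c(x) < oo. *)
Lemma Dt_ind x : Dt b c (ind x).
Proof.
  split.
  - assert (Hswap : summable (fun p : X * X => rowf x (snd p, fst p))).
    { apply (summable_comp_inj (rowf x)); [|apply rowf_summable].
      intros [p1 p2] [q1 q2]; simpl; intros H; inversion H; auto. }
    destruct (summable_add _ _ (rowf_summable x) Hswap) as [Hsum _].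
    refine (proj1 (summable_mono _ _ _ Hsum)).
    intros [p1 p2]. unfold edge_term, rowf, ind; simpl.
    pose proof (b_nonneg b c Hw p1 p2).
    pose proof (b_nonneg b c Hw x p2); pose proof (b_nonneg b c Hw x p1).
    destruct (excluded_middle_informative (p1 = x)), (excluded_middle_informative (p2 = x));
      unfold Cnorm2, Csub, Cadd, Copp, C0, C1; simpl.
    + subst; nra.
    + subst; nra.
    + subst; rewrite (b_sym b c Hw p1 x); nra.
    + nra.
  - refine (proj1 (summable_mono _ _ _ (point_summable x (c x) (c_nonneg b c Hw x)))).
    intros y. unfold kill_term, ind. cbv beta.
    pose proof (c_nonneg b c Hw y).
    destruct (excluded_middle_informative (y = x)); subst; unfold Cnorm2, C0, C1; simpl; nra.
Qed.

Lemma Dt_finsupp phi : finitely_supported phi -> Dt b c phi.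
Proof.
  apply finsupp_ind.
  - apply Dt_zero.
  - apply Dt_add; auto.
  - intros; apply Dt_scal; auto.
  - apply Dt_ind.
Qed.

End Indicators.

(** * The algebra A^+ and its characters *)

Lemma bounded_cstar {X : Type} : cstar_subalgebra (@bounded X).
Proof.
  split; [auto|]. split; [exists 0; intros; rewrite Cabs_C0; lra|].
  split; [|split; [|split; [|split]]].
  - intros f g [M1 H1] [M2 H2]. exists (M1 + M2). intros x.
    eapply Rle_trans; [apply Cabs_add|]. specialize (H1 x); specialize (H2 x); lra.
  - intros a f [M H]. exists (Cabs a * M). intros x. rewrite Cabs_mul.
    apply Rmult_le_compat_l; auto. apply Cabs_nonneg.
  - intros f g [M1 H1] [M2 H2]. exists (Rabs M1 * Rabs M2). intros x. rewrite Cabs_mul.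
    specialize (H1 x); specialize (H2 x). pose proof (Rle_abs M1); pose proof (Rle_abs M2).
    apply Rmult_le_compat; try apply Cabs_nonneg; lra.
  - intros f [M H]. exists M. intros x. rewrite Cabs_conj; auto.
  - intros g [Hg _]; auto.
Qed.

Section Aplus.
Context {X : Type} (b : X -> X -> R) (c : X -> R).

Lemma Aplus_cstar : cstar_subalgebra (Aplus b c).
Proof.
  split; [|split; [|split; [|split; [|split; [|split]]]]].
  - intros f Hf. apply (Hf bounded bounded_cstar).
    + intros g [Hg _]; auto.
    + exists 1. intros; rewrite Cabs_C1; lra.
  - intros Sa HS _ _. apply (proj1 (proj2 HS)).
  - intros f g Hf Hg Sa HS HA H1. pose proof HS as (_ & _ & Ad & _).
    apply Ad; [apply Hf|apply Hg]; auto.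
  - intros a f Hf Sa HS HA H1. pose proof HS as (_ & _ & _ & Sc & _). apply Sc, Hf; auto.
  - intros f g Hf Hg Sa HS HA H1. pose proof HS as (_ & _ & _ & _ & Mu & _).
    apply Mu; [apply Hf|apply Hg]; auto.
  - intros f Hf Sa HS HA H1. pose proof HS as (_ & _ & _ & _ & _ & Cj & _). apply Cj, Hf; auto.
  - intros g [Bg Hg] Sa HS HA H1. pose proof HS as (_ & _ & _ & _ & _ & _ & Cl). apply Cl. split; auto.
    intros e He. destruct (Hg e He) as [f [Hf Hfe]]. exists f; split; auto. apply Hf; auto.
Qed.

Lemma Aplus_bounded f : Aplus b c f -> bounded f.
Proof. apply (proj1 Aplus_cstar). Qed.

Lemma Aplus_one : Aplus b c (fun _ => C1).
Proof. intros S HS HA H1; auto. Qed.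

Lemma Aplus_Dt f : canonically_compactifiable b c -> Dt b c f -> Aplus b c f.
Proof.
  intros Hcc Df Sa HS HA H1. apply HA. split; [apply Hcc; auto|].
  intros eps He. exists f. split; auto. intros x.
  replace (Csub (f x) (f x)) with C0 by cring. rewrite Cabs_C0; auto.
Qed.

End Aplus.

Fixpoint Cpow (z : Cplx) (n : nat) : Cplx :=
  match n with O => C1 | S n => Cmul (Cpow z n) z end.
Fixpoint Psum (z : Cplx) (n : nat) : Cplx :=
  match n with O => C0 | S n => Cadd (Psum z n) (Cpow z n) end.

Lemma Psum_id z n : Cmul (Csub C1 z) (Psum z n) = Csub C1 (Cpow z n).
Proof.
  induction n; simpl. cring.
  transitivity (Cadd (Cmul (Csub C1 z) (Psum z n)) (Cmul (Csub C1 z) (Cpow z n))); [cring|].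
  rewrite IHn. cring.
Qed.

Lemma Cabs_pow z n : Cabs (Cpow z n) = Cabs z ^ n.
Proof. induction n; simpl. apply Cabs_C1. rewrite Cabs_mul, IHn. ring. Qed.

Lemma Cabs_Cinv z : z <> C0 -> Cabs (Cinv z) * Cabs z = 1.
Proof. intros Hz. rewrite <- Cabs_mul, Cinv_l by auto. apply Cabs_C1. Qed.

Section Characters.
Context {X : Type} (Sa : (X -> Cplx) -> Prop) (HS : cstar_subalgebra Sa)
  (Sa1 : Sa (fun _ => C1)).

Lemma sub_zero : Sa (fun _ => C0).
Proof. destruct HS as (_ & H & _); auto. Qed.
Lemma sub_add f g : Sa f -> Sa g -> Sa (fun x => Cadd (f x) (g x)).
Proof. destruct HS as (_ & _ & H & _); auto. Qed.
Lemma sub_scal a f : Sa f -> Sa (fun x => Cmul a (f x)).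
Proof. destruct HS as (_ & _ & _ & H & _); auto. Qed.
Lemma sub_mul f g : Sa f -> Sa g -> Sa (fun x => Cmul (f x) (g x)).
Proof. destruct HS as (_ & _ & _ & _ & H & _); auto. Qed.
Lemma sub_closed g : sup_closure Sa g -> Sa g.
Proof. destruct HS as (_ & _ & _ & _ & _ & _ & H); auto. Qed.

Lemma sub_Psum h n : Sa h -> Sa (fun x => Psum (h x) n).
Proof.
  intros Sh. induction n as [|n IH]; simpl.
  - apply sub_zero.
  - apply sub_add; auto. clear IH. induction n; simpl; auto. apply sub_mul; auto.
Qed.

(* Neumann series: if |h| <= q < 1 then 1 - h is invertible in the algebra,
   its inverse being the uniform limit of the partial sums of sum_n h^n. *)
Lemma neumann_inverse h q : Sa h -> 0 <= q < 1 -> (forall x, Cabs (h x) <= q) ->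
  exists g, Sa g /\ forall x, Cmul (Csub C1 (h x)) (g x) = C1.
Proof.
  intros Sh [Hq0 Hq1] Bh.
  assert (Kk : forall x, 1 - q <= Cabs (Csub C1 (h x))).
  { intros x. pose proof (Cabs_rev_tri C1 (h x)). rewrite Cabs_C1 in H. specialize (Bh x). lra. }
  assert (Knz : forall x, Csub C1 (h x) <> C0)
    by (intros x E; specialize (Kk x); rewrite E, Cabs_C0 in Kk; lra).
  set (g := fun x => Cinv (Csub C1 (h x))).
  assert (Hkg : forall x, Cmul (Csub C1 (h x)) (g x) = C1)
    by (intros x; unfold g; rewrite <- (Cinv_l _ (Knz x)) at 3; cring).
  assert (Bg : forall x, Cabs (g x) <= / (1 - q)).
  { intros x. pose proof (Cabs_Cinv _ (Knz x)). specialize (Kk x). pose proof (Cabs_nonneg (g x)).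
    fold (g x) in H. apply (Rmult_le_reg_l (1 - q)); [lra|]. rewrite Rinv_r by lra. nra. }
  exists g. split; auto.
  apply sub_closed. split; [exists (/ (1 - q)); auto|].
  intros eps He.
  destruct (pow_lt_1_zero q ltac:(rewrite Rabs_right; lra) (eps * (1 - q)) ltac:(nra)) as [N HN].
  specialize (HN N (le_n N)). rewrite Rabs_right in HN by (apply Rle_ge, pow_le; auto).
  exists (fun x => Psum (h x) N). split; [apply sub_Psum; auto|].
  intros x.
  assert (E : Csub (g x) (Psum (h x) N) = Cmul (g x) (Cpow (h x) N)).
  { transitivity (Csub (g x) (Cmul (Cmul (Csub C1 (h x)) (g x)) (Psum (h x) N)));
      [rewrite Hkg; cring|].
    transitivity (Csub (g x) (Cmul (g x) (Cmul (Csub C1 (h x)) (Psum (h x) N)))); [cring|].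
    rewrite Psum_id. cring. }
  rewrite E, Cabs_mul, Cabs_pow.
  pose proof (Bg x). pose proof (Cabs_nonneg (g x)).
  assert (Cabs (h x) ^ N <= q ^ N) by (apply pow_incr; split; [apply Cabs_nonneg| auto]).
  assert (0 <= Cabs (h x) ^ N) by (apply pow_le, Cabs_nonneg).
  apply Rle_lt_trans with (/ (1 - q) * q ^ N).
  - apply Rmult_le_compat; auto.
  - apply (Rmult_lt_reg_l (1 - q)); [lra|]. rewrite <- Rmult_assoc, Rinv_r by lra. lra.
Qed.

Context (gam : (X -> Cplx) -> Cplx) (Hg : is_character Sa gam).

Lemma char_add f g : Sa f -> Sa g -> gam (fun x => Cadd (f x) (g x)) = Cadd (gam f) (gam g).
Proof. destruct Hg as [H _]; auto. Qed.
Lemma char_scal a f : Sa f -> gam (fun x => Cmul a (f x)) = Cmul a (gam f).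
Proof. destruct Hg as [_ [H _]]; auto. Qed.
Lemma char_mul f g : Sa f -> Sa g -> gam (fun x => Cmul (f x) (g x)) = Cmul (gam f) (gam g).
Proof. destruct Hg as [_ [_ [H _]]]; auto. Qed.

(* gamma(1) is an idempotent, and it is not 0 since gamma is nonzero. *)
Lemma char_one : gam (fun _ => C1) = C1.
Proof.
  destruct (Cidem (gam (fun _ => C1))) as [E|E]; auto.
  - rewrite <- char_mul by auto. f_equal. extensionality x. cring.
  - exfalso. destruct Hg as (_ & _ & _ & f0 & Sf0 & Hne). apply Hne.
    replace f0 with (fun x => Cmul ((fun _ => C1) x) (f0 x)) by (extensionality x; cring).
    rewrite char_mul, E by auto. cring.
Qed.

Lemma char_sub f g : Sa f -> Sa g -> gam (fun x => Csub (f x) (g x)) = Csub (gam f) (gam g).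
Proof.
  intros Sf Sg.
  replace (fun x => Csub (f x) (g x)) with (fun x => Cadd (f x) (Cmul (-1, 0) (g x)))
    by (extensionality x; cring).
  rewrite char_add, char_scal by auto using sub_scal. cring.
Qed.

(* Characters are contractive for the sup norm: if |gamma(f)| > M >= sup |f|,
   then f / gamma(f) = h has gamma(h) = 1 while 1 - h is invertible. *)
Lemma char_bound f M : Sa f -> 0 <= M -> (forall x, Cabs (f x) <= M) -> Cabs (gam f) <= M.
Proof.
  intros Sf HM Hb. apply Rnot_lt_le. intros Hlt.
  assert (Hlam : gam f <> C0) by (intros E; rewrite E, Cabs_C0 in Hlt; lra).
  set (h := fun x => Cmul (Cinv (gam f)) (f x)).
  assert (Sh : Sa h) by (apply sub_scal; auto).
  assert (gh : gam h = C1) by (unfold h; rewrite char_scal by auto; apply Cinv_l; auto).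
  destruct (neumann_inverse h (M / Cabs (gam f))) as [g [Sg Hhg]]; auto.
  - split; [apply Rmult_le_pos; auto; left; apply Rinv_0_lt_compat; lra|].
    apply (Rmult_lt_reg_r (Cabs (gam f))); [lra|]. unfold Rdiv. rewrite Rmult_assoc, Rinv_l; lra.
  - intros x. unfold h. rewrite Cabs_mul.
    pose proof (Cabs_Cinv _ Hlam). specialize (Hb x). pose proof (Cabs_nonneg (Cinv (gam f))).
    apply (Rmult_le_reg_r (Cabs (gam f))); [lra|].
    replace (M / Cabs (gam f) * Cabs (gam f)) with M by (field; lra). nra.
  - assert (E : gam (fun x => Cmul (Csub C1 (h x)) (g x)) = C1).
    { replace (fun x => Cmul (Csub C1 (h x)) (g x)) with (fun _ : X => C1)
        by (extensionality x; rewrite Hhg; auto).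
      apply char_one. }
    rewrite char_mul in E; auto.
    + rewrite (char_sub (fun _ => C1) h), char_one, gh in E; auto.
      unfold Cmul, Csub, Cadd, Copp, C1 in E; simpl in E. injection E; intros; lra.
    + apply (sub_add (fun _ => C1) (fun x => Cmul (-1, 0) (h x))) in Sa1; [|apply sub_scal; auto].
      replace (fun x => Csub C1 (h x)) with (fun x => Cadd C1 (Cmul (-1, 0) (h x)))
        by (extensionality x; cring). auto.
Qed.

End Characters.

(** * Boundary characters kill the functions vanishing at infinity *)

Definition vanishes_at_infinity {X : Type} (u : X -> Cplx) : Prop :=
  forall e, 0 < e -> exists l : list X, forall x, ~ In x l -> Cabs (u x) <= e.

Definition restrict {X : Type} (l : list X) (u : X -> Cplx) : X -> Cplx :=
  fun x => if excluded_middle_informative (In x l) then u x else C0.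

Lemma le_eps a : (forall e, 0 < e -> a <= e) -> a <= 0.
Proof. intros H. apply Rnot_lt_le. intros Hlt. specialize (H (a / 2) ltac:(lra)). lra. Qed.

Section Boundary.
Context {X : Type} (b : X -> X -> R) (c : X -> R) (Hw : weighted_graph b c)
  (Hcc : canonically_compactifiable b c).

Lemma Aplus_ind x : Aplus b c (ind x).
Proof. apply Aplus_Dt; auto. apply Dt_ind; auto. Qed.

Context (gam : (X -> Cplx) -> Cplx) (Hgb : in_boundary b c gam).

(* gamma(1_x) is idempotent; were it 1, gamma(f) = gamma(f 1_x) = f(x) would
   make gamma the point evaluation at x, which is not in the boundary. *)
Lemma boundary_ind x : gam (ind x) = C0.
Proof.
  destruct Hgb as [Hg Hnd].
  assert (Hsq : forall y, Cmul (ind x y) (ind x y) = ind x y)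
    by (intros y; unfold ind; destruct (excluded_middle_informative (y = x)); cring).
  destruct (Cidem (gam (ind x))) as [E|E]; auto.
  - rewrite <- (char_mul _ _ Hg) by apply Aplus_ind. f_equal. extensionality y. apply Hsq.
  - exfalso. apply (Hnd x). intros f Hf. unfold delta.
    assert (Hloc : gam (fun y => Cmul (f y) (ind x y)) = gam (fun y => Cmul (f x) (ind x y))).
    { f_equal. extensionality y. unfold ind.
      destruct (excluded_middle_informative (y = x)); [subst; auto| cring]. }
    rewrite (char_mul _ _ Hg), (char_scal _ _ Hg), E in Hloc by auto using Aplus_ind.
    transitivity (Cmul (gam f) C1); [cring|]. rewrite Hloc. cring.
Qed.

Lemma boundary_finsupp phi : finitely_supported phi -> Aplus b c phi /\ gam phi = C0.
Proof.
  destruct Hgb as [Hg _].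
  apply (finsupp_ind (fun f => Aplus b c f /\ gam f = C0)).
  - split; [apply (sub_zero _ (Aplus_cstar b c))|].
    replace (fun _ : X => C0) with (fun x => Cmul C0 ((fun _ : X => C1) x)) by (extensionality x; cring).
    rewrite (char_scal _ _ Hg C0 (fun _ : X => C1)) by apply Aplus_one. cring.
  - intros f g [Af gf] [Ag gg]. split; [apply (sub_add _ (Aplus_cstar b c)); auto|].
    rewrite (char_add _ _ Hg), gf, gg by auto. cring.
  - intros a f [Af gf]. split; [apply (sub_scal _ (Aplus_cstar b c)); auto|].
    rewrite (char_scal _ _ Hg), gf by auto. cring.
  - intros x. split; [apply Aplus_ind| apply boundary_ind].
Qed.

(* For u vanishing at infinity, u minus its restriction to a finite set is
   uniformly small, and gamma kills the finitely supported restriction. *)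
Lemma boundary_vanishes u : Aplus b c u -> vanishes_at_infinity u -> gam u = C0.
Proof.
  intros Au Hv. destruct Hgb as [Hg _].
  apply Cabs0_eq, Rle_antisym; [|apply Cabs_nonneg].
  apply le_eps. intros e He. destruct (Hv e He) as [l Hl].
  destruct (boundary_finsupp (restrict l u)) as [Ar gr].
  { exists l. intros x Hx. unfold restrict.
    destruct (excluded_middle_informative (In x l)); [contradiction| auto]. }
  replace (gam u) with (gam (fun x => Csub (u x) (restrict l u x)))
    by (rewrite (char_sub _ (Aplus_cstar b c) _ Hg), gr by auto; cring).
  apply (char_bound _ (Aplus_cstar b c) (Aplus_one b c) _ Hg); [| lra |].
  - replace (fun x => Csub (u x) (restrict l u x))
      with (fun x => Cadd (u x) (Cmul (-1, 0) (restrict l u x))) by (extensionality x; cring).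
    apply (sub_add _ (Aplus_cstar b c)); [auto| apply (sub_scal _ (Aplus_cstar b c)); auto].
  - intros x. unfold restrict. destruct (excluded_middle_informative (In x l)).
    + replace (Csub (u x) (u x)) with C0 by cring. rewrite Cabs_C0. lra.
    + replace (Csub (u x) C0) with (u x) by cring. auto.
Qed.

End Boundary.

(** * Characters at infinity, from a free ultrafilter on nat *)

Definition free_ultrafilter (U : (nat -> Prop) -> Prop) : Prop :=
 (forall A B : nat -> Prop, (forall n, A n -> B n) -> U A -> U B) /\
 (forall A B : nat -> Prop, U A -> U B -> U (fun n => A n /\ B n)) /\
 ~ U (fun _ => False) /\
 (forall A : nat -> Prop, U A \/ U (fun n => ~ A n)) /\
 (forall N : nat, U (fun n => (N <= n)%nat)).

(* The ultrafilter lemma, applied to the Frechet filter of cofinite sets. *)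
Module UltrafilterOnNat.
Import ssreflect ssrbool ssrnat classical_sets filter.
Lemma free_ultrafilter_exists : exists U, free_ultrafilter U.
Proof.
have [G [UG sub]] := ultraFilterLemma (@eventually_filter).
exists G. have PG : ProperFilter G := ultra_proper.
split; [|split; [|split; [|split]]].
- move=> A B AB GA. by apply: filterS GA => n /AB.
- move=> A B GA GB. exact: (filterI GA GB).
- move=> H. apply: (filter_not_empty G). by have -> : set0 = (fun _ : nat => False) by [].
- move=> A. have [h|h] := in_ultra_setVsetC A UG; [by left| by right].
- move=> N. apply: sub. exists N => // n /= /leP. done.
Qed.
End UltrafilterOnNat.

Section Ultralimits.
Context (U : (nat -> Prop) -> Prop) (HU : free_ultrafilter U).

Lemma U_mono (A B : nat -> Prop) : (forall n, A n -> B n) -> U A -> U B.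
Proof. destruct HU as [H _]; apply H. Qed.
Lemma U_and (A B : nat -> Prop) : U A -> U B -> U (fun n => A n /\ B n).
Proof. destruct HU as [_ [H _]]; apply H. Qed.
Lemma U_ne (A : nat -> Prop) : U A -> exists n, A n.
Proof.
  intros H. apply NNPP; intros Hn. destruct HU as [_ [_ [H0 _]]]. apply H0.
  apply (U_mono A); auto. intros n An; apply Hn; eauto.
Qed.
Lemma U_ult (A : nat -> Prop) : U A \/ U (fun n => ~ A n).
Proof. destruct HU as [_ [_ [_ [H _]]]]; apply H. Qed.
Lemma U_ge N : U (fun n => (N <= n)%nat).
Proof. destruct HU as [_ [_ [_ [_ H]]]]; apply H. Qed.
Lemma U_all (A : nat -> Prop) : (forall n, A n) -> U A.
Proof. intros H. apply (U_mono (fun n => (0 <= n)%nat)); auto. apply U_ge. Qed.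

Definition ulim (a : nat -> R) (l : R) : Prop := forall d, 0 < d -> U (fun n => Rabs (a n - l) < d).

Lemma ulim_unique a l m : ulim a l -> ulim a m -> l = m.
Proof.
  intros Hl Hm. apply NNPP; intros Hne.
  set (d := Rabs (l - m) / 2).
  assert (Hd : 0 < d) by (unfold d; assert (l - m <> 0) by lra; pose proof (Rabs_pos_lt _ H); lra).
  destruct (U_ne _ (U_and _ _ (Hl d Hd) (Hm d Hd))) as [n [H1 H2]].
  assert (Rabs (l - m) <= Rabs (a n - l) + Rabs (a n - m)).
  { replace (l - m) with (-(a n - l) + (a n - m)) by ring. eapply Rle_trans; [apply Rabs_triang|]. rewrite Rabs_Ropp; lra. }
  unfold d in *. lra.
Qed.

Lemma ulim_const a l : (forall n, a n = l) -> ulim a l.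
Proof. intros H d Hd. apply U_all. intros n. rewrite H, Rminus_diag, Rabs_R0. auto. Qed.

Lemma ulim_eq a a' l l' : ulim a l -> (forall n, a n = a' n) -> l = l' -> ulim a' l'.
Proof. intros H E <- d Hd. refine (U_mono _ _ _ (H d Hd)). intros n; rewrite E; auto. Qed.

(* Bounded sequences have limits along an ultrafilter: the supremum of the
   levels t with {n | t <= a_n} in U. *)
Lemma ulim_exists a M : (forall n, Rabs (a n) <= M) -> exists l, ulim a l.
Proof.
  intros HM.
  set (E := fun t => U (fun n => t <= a n)).
  assert (Eb : bound E).
  { exists M. intros t Et. apply Rnot_lt_le. intros Hlt.
    destruct (U_ne _ Et) as [n Hn]. specialize (HM n). pose proof (Rle_abs (a n)). lra. }
  assert (Ene : exists t, E t).
  { exists (- M). apply U_all. intros n. specialize (HM n). pose proof (Rabs_pos (a n)).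
    unfold Rabs in HM; destruct (Rcase_abs (a n)); lra. }
  destruct (completeness E Eb Ene) as [L [Hub Hlub]].
  exists L. intros d Hd.
  assert (Hlow : U (fun n => L - d < a n)).
  { apply NNPP; intros Hn.
    assert (L <= L - d); [|lra].
    apply Hlub. intros t Et. apply Rnot_lt_le. intros Hlt. apply Hn.
    refine (U_mono _ _ _ Et). intros n Hn'; lra. }
  assert (Hup : U (fun n => a n < L + d)).
  { destruct (U_ult (fun n => a n < L + d)) as [H'|H']; auto.
    assert (E (L + d)) by (refine (U_mono _ _ _ H'); intros n Hn'; lra).
    specialize (Hub _ H). lra. }
  refine (U_mono _ _ _ (U_and _ _ Hlow Hup)).
  intros n [H1 H2]. unfold Rabs; destruct (Rcase_abs _); lra.
Qed.

Lemma ulim_lin a b l m al be : ulim a l -> ulim b m -> ulim (fun n => al * a n + be * b n) (al * l + be * m).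
Proof.
  intros Ha Hb d Hd.
  set (d1 := d / (2 * (Rabs al + 1))). set (d2 := d / (2 * (Rabs be + 1))).
  pose proof (Rabs_pos al); pose proof (Rabs_pos be).
  assert (0 < d1) by (unfold d1; apply Rdiv_lt_0_compat; lra).
  assert (0 < d2) by (unfold d2; apply Rdiv_lt_0_compat; lra).
  refine (U_mono _ _ _ (U_and _ _ (Ha d1 H1) (Hb d2 H2))).
  intros n [E1 E2].
  replace (al * a n + be * b n - (al * l + be * m)) with (al * (a n - l) + be * (b n - m)) by ring.
  eapply Rle_lt_trans; [apply Rabs_triang|]. rewrite !Rabs_mult.
  assert (Rabs al * Rabs (a n - l) <= Rabs al * d1) by (apply Rmult_le_compat_l; lra).
  assert (Rabs be * Rabs (b n - m) <= Rabs be * d2) by (apply Rmult_le_compat_l; lra).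
  assert (Rabs al * d1 < d / 2) by (unfold d1; apply (Rmult_lt_reg_l (2 * (Rabs al + 1))); [lra|]; field_simplify; lra).
  assert (Rabs be * d2 < d / 2) by (unfold d2; apply (Rmult_lt_reg_l (2 * (Rabs be + 1))); [lra|]; field_simplify; lra).
  lra.
Qed.

Lemma ulim_mult a b l m : ulim a l -> ulim b m -> ulim (fun n => a n * b n) (l * m).
Proof.
  intros Ha Hb d Hd.
  pose proof (Rabs_pos l); pose proof (Rabs_pos m).
  set (d1 := d / (2 * (Rabs m + 1))). set (d2 := Rmin 1 (d / (2 * (Rabs l + 1)))).
  assert (0 < d1) by (unfold d1; apply Rdiv_lt_0_compat; lra).
  assert (0 < d2) by (unfold d2; apply Rmin_glb_lt; [lra| apply Rdiv_lt_0_compat; lra]).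
  refine (U_mono _ _ _ (U_and _ _ (Ha d1 H1) (Hb d2 H2))).
  intros n [E1 E2].
  assert (Hb1 : Rabs (b n) <= Rabs m + 1).
  { assert (d2 <= 1) by apply Rmin_l. replace (b n) with ((b n - m) + m) by ring.
    eapply Rle_trans; [apply Rabs_triang|]. lra. }
  assert (Hd2 : d2 <= d / (2 * (Rabs l + 1))) by apply Rmin_r.
  replace (a n * b n - l * m) with ((a n - l) * b n + l * (b n - m)) by ring.
  eapply Rle_lt_trans; [apply Rabs_triang|]. rewrite !Rabs_mult.
  assert (Rabs (a n - l) * Rabs (b n) <= d1 * (Rabs m + 1)).
  { apply Rmult_le_compat; try apply Rabs_pos; lra. }
  assert (Rabs l * Rabs (b n - m) <= Rabs l * (d / (2 * (Rabs l + 1)))).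
  { apply Rmult_le_compat_l; lra. }
  assert (d1 * (Rabs m + 1) = d / 2) by (unfold d1; field; lra).
  assert (Rabs l * (d / (2 * (Rabs l + 1))) < d / 2).
  { apply (Rmult_lt_reg_l (2 * (Rabs l + 1))); [lra|]. field_simplify; lra. }
  lra.
Qed.

(* The ultralimit as a total function (0 when it does not exist). *)
Definition Lim (a : nat -> R) : R :=
  match excluded_middle_informative (exists l, ulim a l) with
  | left H => proj1_sig (constructive_indefinite_description _ H)
  | right _ => 0
  end.

Lemma Lim_eq a l : ulim a l -> Lim a = l.
Proof.
  intros H. unfold Lim. destruct (excluded_middle_informative (exists l, ulim a l)) as [E|E].
  - apply (ulim_unique a); auto. apply proj2_sig.
  - exfalso; apply E; eauto.
Qed.

End Ultralimits.

Section CharacterAtInfinity.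
Context {X : Type} (b : X -> X -> R) (c : X -> R) (Hw : weighted_graph b c)
  (Hcc : canonically_compactifiable b c)
  (U : (nat -> Prop) -> Prop) (HU : free_ultrafilter U)
  (xs : nat -> X) (Hinj : forall n m, xs n = xs m -> n = m).

Definition gamU (f : X -> Cplx) : Cplx :=
  (Lim U (fun n => fst (f (xs n))), Lim U (fun n => snd (f (xs n)))).

Lemma gamU_spec f l1 l2 : ulim U (fun n => fst (f (xs n))) l1 -> ulim U (fun n => snd (f (xs n))) l2 ->
  gamU f = (l1, l2).
Proof. intros H1 H2. unfold gamU. rewrite (Lim_eq U HU _ l1), (Lim_eq U HU _ l2); auto. Qed.

Lemma bounded_ulims f : bounded f ->
  exists l1 l2, ulim U (fun n => fst (f (xs n))) l1 /\ ulim U (fun n => snd (f (xs n))) l2.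
Proof.
  intros [M HM].
  destruct (ulim_exists U HU (fun n => fst (f (xs n))) M) as [l1 H1].
  { intros n. eapply Rle_trans; [apply fst_le_Cabs| apply HM]. }
  destruct (ulim_exists U HU (fun n => snd (f (xs n))) M) as [l2 H2].
  { intros n. eapply Rle_trans; [apply snd_le_Cabs| apply HM]. }
  eauto.
Qed.

(* Limits along U are additive, homogeneous and multiplicative. *)
Lemma gamU_char : is_character (Aplus b c) gamU.
Proof.
  assert (Lims : forall f, Aplus b c f -> exists l1 l2,
    ulim U (fun n => fst (f (xs n))) l1 /\ ulim U (fun n => snd (f (xs n))) l2)
    by (intros f Af; apply bounded_ulims, (Aplus_bounded b c); auto).
  split; [|split; [|split]].
  - intros f g Af Ag.
    destruct (Lims f Af) as [l1 [l2 [H1 H2]]]. destruct (Lims g Ag) as [m1 [m2 [K1 K2]]].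
    rewrite (gamU_spec f l1 l2), (gamU_spec g m1 m2) by auto. apply gamU_spec.
    + apply (ulim_eq U HU _ _ _ _ (ulim_lin U HU _ _ _ _ 1 1 H1 K1)); intros; simpl; ring.
    + apply (ulim_eq U HU _ _ _ _ (ulim_lin U HU _ _ _ _ 1 1 H2 K2)); intros; simpl; ring.
  - intros [a1 a2] f Af.
    destruct (Lims f Af) as [l1 [l2 [H1 H2]]].
    rewrite (gamU_spec f l1 l2) by auto. apply gamU_spec.
    + apply (ulim_eq U HU _ _ _ _ (ulim_lin U HU _ _ _ _ a1 (- a2) H1 H2)); intros; simpl; ring.
    + apply (ulim_eq U HU _ _ _ _ (ulim_lin U HU _ _ _ _ a1 a2 H2 H1)); intros; simpl; ring.
  - intros f g Af Ag.
    destruct (Lims f Af) as [l1 [l2 [H1 H2]]]. destruct (Lims g Ag) as [m1 [m2 [K1 K2]]].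
    rewrite (gamU_spec f l1 l2), (gamU_spec g m1 m2) by auto. apply gamU_spec.
    + apply (ulim_eq U HU _ _ _ _ (ulim_lin U HU _ _ _ _ 1 (-1)
        (ulim_mult U HU _ _ _ _ H1 K1) (ulim_mult U HU _ _ _ _ H2 K2))); intros; simpl; ring.
    + apply (ulim_eq U HU _ _ _ _ (ulim_lin U HU _ _ _ _ 1 1
        (ulim_mult U HU _ _ _ _ H1 K2) (ulim_mult U HU _ _ _ _ H2 K1))); intros; simpl; ring.
  - exists (fun _ => C1). split; [apply Aplus_one|].
    rewrite (gamU_spec _ 1 0) by (apply ulim_const; auto).
    intros E; injection E; lra.
Qed.

(* Since x_n eventually avoids any given point, gamma_U kills every 1_x,
   so it is not a point evaluation. *)
Lemma gamU_boundary : in_boundary b c gamU.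
Proof.
  split; [apply gamU_char|]. intros x Hs.
  assert (Hfar : U (fun n => xs n <> x)).
  { destruct (classic (exists m, xs m = x)) as [[m Hm]|Hn].
    - apply (U_mono U HU (fun n => (S m <= n)%nat)); [|apply U_ge; auto].
      intros n Hn E. rewrite <- Hm in E. apply Hinj in E. lia.
    - apply U_all; auto. intros n E; apply Hn; eauto. }
  assert (Hind : gamU (ind x) = C0).
  { unfold C0. apply gamU_spec; intros d Hd; refine (U_mono U HU _ _ _ Hfar); intros n Hn;
      unfold ind; destruct (excluded_middle_informative (xs n = x)); try contradiction; simpl;
      rewrite Rminus_diag, Rabs_R0; auto. }
  specialize (Hs (ind x) (Aplus_ind b c Hw Hcc x)). rewrite Hind in Hs. unfold delta, ind in Hs.
  destruct (excluded_middle_informative (x = x)) as [_|n]; [|apply n; auto].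
  unfold C0, C1 in Hs. injection Hs; lra.
Qed.

Lemma gamU_nonzero u e : bounded u -> 0 < e -> (forall n, e < Cabs (u (xs n))) -> gamU u <> C0.
Proof.
  intros Bu He Hn E.
  destruct (bounded_ulims u Bu) as [l1 [l2 [H1 H2]]].
  rewrite (gamU_spec u l1 l2 H1 H2) in E. unfold C0 in E. injection E; intros; subst.
  destruct (U_ne U HU _ (U_and U HU _ _ (H1 (e/2) ltac:(lra)) (H2 (e/2) ltac:(lra)))) as [n [E1 E2]].
  specialize (Hn n). pose proof (Cabs_le_sum (u (xs n))). rewrite !Rminus_0_r in *. lra.
Qed.

End CharacterAtInfinity.

(* A function not vanishing at infinity stays above some e > 0 along an
   injective sequence (each point is chosen outside the previous ones). *)
Lemma escaping_sequence {X : Type} (u : X -> Cplx) : ~ vanishes_at_infinity u ->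
  exists e (xs : nat -> X), 0 < e /\ (forall n m, xs n = xs m -> n = m) /\
    forall n, e < Cabs (u (xs n)).
Proof.
  intros Hn. apply not_all_ex_not in Hn as [e He].
  apply imply_to_and in He as [He Hn].
  assert (Hch : forall l : list X, exists x, ~ In x l /\ e < Cabs (u x)).
  { intros l. apply NNPP; intros H. apply Hn. exists l. intros x Hx. apply Rnot_lt_le. intros Hlt. apply H; eauto. }
  set (ch := fun l => proj1_sig (constructive_indefinite_description _ (Hch l))).
  assert (Pch : forall l, ~ In (ch l) l /\ e < Cabs (u (ch l))) by (intros l; unfold ch; apply proj2_sig).
  set (pre := fix pre (n : nat) : list X := match n with O => nil | S k => ch (pre k) :: pre k end).
  set (xs := fun n => ch (pre n)).
  assert (Hin : forall m n, (m < n)%nat -> In (xs m) (pre n)).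
  { intros m n; induction n; intros H; [lia|]. simpl.
    destruct (Nat.eq_dec m n) as [->|Hne]; [left; auto|right; apply IHn; lia]. }
  exists e, xs. split; [auto| split; [|intros n; apply Pch]].
  intros n m E. destruct (Nat.lt_trichotomy n m) as [H|[H|H]]; auto.
  - exfalso. apply (proj1 (Pch (pre m))). fold (xs m). rewrite <- E. apply Hin; auto.
  - exfalso. apply (proj1 (Pch (pre n))). fold (xs n). rewrite E. apply Hin; auto.
Qed.

Lemma vanishing_of_boundary {X : Type} (b : X -> X -> R) (c : X -> R) (u : X -> Cplx) :
  weighted_graph b c -> canonically_compactifiable b c -> Aplus b c u ->
  (forall gam, in_boundary b c gam -> hat u gam = C0) -> vanishes_at_infinity u.
Proof.
  intros Hw Hcc Au Hb. apply NNPP; intros Hn.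
  destruct (escaping_sequence u Hn) as [e [xs [He [Hinj Hxs]]]].
  destruct UltrafilterOnNat.free_ultrafilter_exists as [U HU].
  apply (gamU_nonzero U HU xs u e); auto.
  - apply (Aplus_bounded b c); auto.
  - apply (Hb (gamU U xs)). apply gamU_boundary; auto.
Qed.

(** * Canonical compactifiability makes D~ -> l^oo bounded *)

Definition re {X : Type} (g : X -> R) : X -> Cplx := fun y => (g y, 0).

Lemma Cnorm2_sub_re {X : Type} (g : X -> R) x y :
  Cnorm2 (Csub (re g x) (re g y)) = (g x - g y) * (g x - g y).
Proof. unfold re, Cnorm2, Csub, Cadd, Copp; simpl. ring. Qed.

Lemma Un_cv_const a : Un_cv (fun _ => a) a.
Proof. intros eps He. exists O. intros. unfold Rdist. rewrite Rminus_diag, Rabs_R0. auto. Qed.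

Lemma fsum_cv {T : Type} (F : nat -> T -> R) (G : T -> R) L :
  (forall p, Un_cv (fun N => F N p) (G p)) -> Un_cv (fun N => fsum (F N) L) (fsum G L).
Proof. intros H. induction L; simpl. apply Un_cv_const. apply CV_plus; auto. Qed.

Section Embedding.
Context {X : Type} (b : X -> X -> R) (c : X -> R) (o : X) (Hw : weighted_graph b c).

Notation N f := (normo b c o f).

Lemma Qt_le_normo f : Qt b c f <= N f * N f.
Proof. rewrite normo_sq by auto. pose proof (Cnorm2_nonneg (f o)). lra. Qed.

Lemma o_le_normo f : Cabs (f o) <= N f.
Proof.
  apply Cabs_le. apply normo_nonneg. rewrite normo_sq by auto. pose proof (Qt_nonneg b c Hw f). lra.
Qed.

Lemma edge_bound x y : 0 < b x y -> exists K, 0 <= K /\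
  forall f, Dt b c f -> Cabs (Csub (f x) (f y)) <= K * N f.
Proof.
  intros Hb. exists (sqrt (2 / b x y)). split; [apply sqrt_pos|]. intros f [ef kf].
  apply Cabs_le. apply Rmult_le_pos; [apply sqrt_pos| apply normo_nonneg].
  replace (sqrt (2 / b x y) * N f * (sqrt (2 / b x y) * N f)) with
    ((sqrt (2 / b x y) * sqrt (2 / b x y)) * (N f * N f)) by ring.
  rewrite sqrt_sqrt by (apply Rlt_le; unfold Rdiv; apply Rmult_lt_0_compat; [lra| apply Rinv_0_lt_compat; auto]).
  assert (He : b x y * Cnorm2 (Csub (f x) (f y)) <= tsum (edge_term b f)).
  { pose proof (tsum_ub (edge_term b f) ((x, y) :: nil) ef ltac:(repeat constructor; simpl; tauto)) as H.
    simpl in H. unfold edge_term in H at 1; simpl in H. lra. }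
  pose proof (Qt_le_normo f). pose proof (tsum_nonneg _ (kill_nonneg b c Hw f)). unfold Qt in *.
  apply (Rmult_le_reg_l (b x y)); auto.
  replace (b x y * (2 / b x y * (N f * N f))) with (2 * (N f * N f)) by (field; lra). lra.
Qed.

Lemma chain_bound l : forall x y, chain b x l y -> exists K, 0 <= K /\
  forall f, Dt b c f -> Cabs (Csub (f x) (f y)) <= K * N f.
Proof.
  induction l as [|z l IH]; intros x y Hc; simpl in Hc.
  - apply edge_bound; auto.
  - destruct Hc as [Hb Hc]. destruct (IH _ _ Hc) as [K2 [HK2 H2]].
    destruct (edge_bound x z Hb) as [K1 [HK1 H1]].
    exists (K1 + K2). split; [lra|]. intros f Df.
    replace (Csub (f x) (f y)) with (Cadd (Csub (f x) (f z)) (Csub (f z) (f y))) by cring.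
    eapply Rle_trans; [apply Cabs_add|]. specialize (H1 f Df); specialize (H2 f Df). lra.
Qed.

Lemma local_bound (Hconn : connected b) x :
  exists K, 0 <= K /\ forall f, Dt b c f -> Cabs (f x) <= K * N f.
Proof.
  destruct (classic (x = o)) as [->|Hne].
  - exists 1. split; [lra|]. intros f _. rewrite Rmult_1_l. apply o_le_normo.
  - destruct (Hconn x o Hne) as [l [_ Hch]]. destruct (chain_bound l x o Hch) as [K [HK H]].
    exists (K + 1). split; [lra|]. intros f Df.
    replace (f x) with (Cadd (Csub (f x) (f o)) (f o)) by cring.
    eapply Rle_trans; [apply Cabs_add|]. specialize (H f Df). pose proof (o_le_normo f). lra.
Qed.

(* Fatou: the energy is lower semicontinuous under pointwise convergence. *)
Lemma energy_fatou (s : nat -> X -> R) (f : X -> R) B :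
  (forall M, Dt b c (re (s M)) /\ Qt b c (re (s M)) <= B) ->
  (forall x, Un_cv (fun M => s M x) (f x)) -> Dt b c (re f).
Proof.
  intros Hs Hcv.
  assert (Hparts : forall M, tsum (edge_term b (re (s M))) <= 2 * B /\ tsum (kill_term c (re (s M))) <= B).
  { intros M. destruct (Hs M) as [_ HQ]. unfold Qt in HQ.
    pose proof (tsum_nonneg _ (edge_nonneg b c Hw (re (s M)))).
    pose proof (tsum_nonneg _ (kill_nonneg b c Hw (re (s M)))). lra. }
  split.
  - apply summable_intro with (2 * B). intros L HL.
    apply (Rle_cv_lim (Un := fun M => fsum (edge_term b (re (s M))) L) (Vn := fun _ => 2 * B)).
    + intros M. eapply Rle_trans; [apply tsum_ub; auto; apply Hs| apply Hparts].
    + apply fsum_cv. intros p. unfold edge_term. rewrite Cnorm2_sub_re.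
      apply (Un_cv_ext (fun M => b (fst p) (snd p) * ((s M (fst p) - s M (snd p)) * (s M (fst p) - s M (snd p)))));
        [intros M; rewrite Cnorm2_sub_re; auto|].
      apply CV_mult; [apply Un_cv_const|]. apply CV_mult; apply CV_minus; auto.
    + apply Un_cv_const.
  - apply summable_intro with B. intros L HL.
    apply (Rle_cv_lim (Un := fun M => fsum (kill_term c (re (s M))) L) (Vn := fun _ => B)).
    + intros M. eapply Rle_trans; [apply tsum_ub; auto; apply Hs| apply Hparts].
    + apply fsum_cv. intros p. unfold kill_term, re. rewrite Cnorm2_re.
      apply (Un_cv_ext (fun M => c p * (s M p * s M p))); [intros M; rewrite Cnorm2_re; auto|].
      apply CV_mult; [apply Un_cv_const|]. apply CV_mult; auto.
    + apply Un_cv_const.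
Qed.

(* Partial sums of a series with ||h_n||_o <= 2^-(n+1) stay in the unit
   ball, by the weighted Cauchy-Schwarz inequality [sq_sumN]. *)
Lemma bump_partial_sums (h : nat -> X -> R) :
  (forall n, Dt b c (re (h n))) -> (forall n, N (re (h n)) <= / 2 ^ (S n)) ->
  forall M, Dt b c (re (fun y => sumN (fun n => h n y) M)) /\
            N (re (fun y => sumN (fun n => h n y) M)) <= 1.
Proof.
  intros Dh Nh M.
  assert (P2 : forall n, 0 < 2 ^ (S n)) by (intros; apply pow_lt; lra).
  destruct (normo_domination b c Hw o (fun n => re (h n)) (fun n => 2 ^ (S n)) M
    (re (fun y => sumN (fun n => h n y) M))) as [Ds Ns]; auto.
  - intros n; left; auto.
  - intros x y. rewrite Cnorm2_sub_re, sumN_minus.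
    eapply Rle_trans; [apply sq_sumN|]. apply Req_le, sumN_ext; intros n. rewrite Cnorm2_sub_re; auto.
  - intros x. unfold re. rewrite Cnorm2_re.
    eapply Rle_trans; [apply sq_sumN|]. apply Req_le, sumN_ext; intros n. rewrite Cnorm2_re; auto.
  - split; auto. apply sq_le_le; [lra|].
    eapply Rle_trans; [apply Ns|].
    apply Rle_trans with (sumN (fun n => / 2 ^ (S n)) M).
    + apply sumN_le; intros n. specialize (Nh n). pose proof (normo_nonneg b c o (re (h n))).
      specialize (P2 n).
      assert (N (re (h n)) * N (re (h n)) <= / 2 ^ S n * / 2 ^ S n) by nra.
      apply (Rmult_le_compat_l (2 ^ S n)) in H0; [|lra].
      replace (2 ^ S n * (/ 2 ^ S n * / 2 ^ S n)) with (/ 2 ^ S n) in H0 by (field; lra). auto.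
    + rewrite geom_sum. pose proof (Rinv_0_lt_compat _ (pow_lt 2 M ltac:(lra))). lra.
Qed.

(* A series of nonnegative bumps with ||h_n||_o <= 2^-(n+1) converges
   pointwise (partial sums are bounded by [local_bound]) to a function of
   finite energy (by [energy_fatou]) dominating every bump. *)
Lemma bump_series (Hconn : connected b) (h : nat -> X -> R) :
  (forall n y, 0 <= h n y) -> (forall n, Dt b c (re (h n))) -> (forall n, N (re (h n)) <= / 2 ^ (S n)) ->
  exists s : X -> R, Dt b c (re s) /\ forall n y, h n y <= s y.
Proof.
  intros hpos Dh Nh.
  set (sM := fun M y => sumN (fun n => h n y) M).
  pose proof (bump_partial_sums h Dh Nh) as SB.
  assert (gr : forall y, Un_growing (fun M => sM M y)).
  { intros y M. unfold sM. simpl. specialize (hpos M y). lra. }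
  assert (ub : forall y, has_ub (fun M => sM M y)).
  { intros y. destruct (local_bound Hconn y) as [K [HK HKb]].
    exists K. intros r [M ->]. destruct (SB M) as [D1 N1]. specialize (HKb _ D1).
    assert (Hy : Rabs (sM M y) <= K * N (re (sM M))) by (rewrite <- Cabs_re; exact HKb).
    assert (N1' : N (re (sM M)) <= 1) by exact N1.
    pose proof (Rle_abs (sM M y)). pose proof (normo_nonneg b c o (re (sM M))). nra. }
  set (s := fun y => proj1_sig (growing_cv _ (gr y) (ub y))).
  assert (cvs : forall y, Un_cv (fun M => sM M y) (s y)) by (intros y; unfold s; apply proj2_sig).
  exists s. split.
  - apply (energy_fatou sM s 1); auto. intros M. destruct (SB M) as [D1 N1]. split; auto.
    change (N (re (sM M)) <= 1) in N1. pose proof (Qt_le_normo (re (sM M))). pose proof (normo_nonneg b c o (re (sM M))). nra.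
  - intros n y. pose proof (growing_ineq _ _ (gr y) (cvs y) (S n)).
    pose proof (sumN_nonneg (fun k => h k y) n (fun k => hpos k y)).
    unfold sM in *; simpl in *. lra.
Qed.

Lemma normalized_bump f x C K : Dt b c f -> 0 < C -> 0 <= K -> C * N f < Cabs (f x) ->
  exists h : X -> R, (forall y, 0 <= h y) /\ Dt b c (re h) /\ N (re h) <= K / C /\ h x = K.
Proof.
  intros Df HC HK Hx. pose proof (normo_nonneg b c o f).
  assert (Hfx : 0 < Cabs (f x)) by nra.
  set (t := K / Cabs (f x)).
  assert (Ht : 0 <= t) by (unfold t; apply Rmult_le_pos; [lra| left; apply Rinv_0_lt_compat; lra]).
  destruct (normo_scaled_modulus b c Hw o t f Ht Df) as [Dh Nh].
  exists (fun y => t * Cabs (f y)). split; [|split; [exact Dh| split]].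
  - intros y. pose proof (Cabs_nonneg (f y)). nra.
  - eapply Rle_trans; [exact Nh|]. unfold t.
    apply (Rmult_le_reg_l (Cabs (f x) * C)); [nra|].
    replace (Cabs (f x) * C * (K / Cabs (f x) * N f)) with (K * (C * N f)) by (field; lra).
    replace (Cabs (f x) * C * (K / C)) with (K * Cabs (f x)) by (field; lra).
    apply Rmult_le_compat_l; lra.
  - unfold t. field. lra.
Qed.

(* Otherwise there are bumps h_n >= 0
   with ||h_n||_o <= 2^-(n+1) and h_n(x_n) = n + 1; their sum has finite
   energy but is unbounded, contradicting canonical compactifiability. *)
Lemma embedding (Hconn : connected b) (Hcc : canonically_compactifiable b c) :
  exists C, 0 <= C /\ forall f, Dt b c f -> forall x, Cabs (f x) <= C * N f.
Proof.
  apply NNPP; intros Hno.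
  assert (Hex : forall n : nat, exists p : (X -> R) * X, (forall y, 0 <= fst p y) /\
     Dt b c (re (fst p)) /\ N (re (fst p)) <= / 2 ^ (S n) /\ fst p (snd p) = INR n + 1).
  { intros n. set (C := (INR n + 1) * 2 ^ (S n)).
    assert (HC : 0 < C) by (unfold C; apply Rmult_lt_0_compat; [pose proof (pos_INR n); lra| apply pow_lt; lra]).
    assert (exists f x, Dt b c f /\ C * N f < Cabs (f x)) as [f [x [Df Hx]]].
    { apply NNPP; intro H. apply Hno. exists C. split; [lra|]. intros f Df x.
      apply Rnot_lt_le. intro. apply H. eauto. }
    destruct (normalized_bump f x C (INR n + 1) Df HC ltac:(pose proof (pos_INR n); lra) Hx)
      as [h [hpos [Dh [Nh hx]]]].
    exists (h, x). cbn [fst snd]. split; [auto| split; [auto| split; [|auto]]].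
    replace (/ 2 ^ S n) with ((INR n + 1) / C)
      by (unfold C; field; split; [apply pow_nonzero; lra| pose proof (pos_INR n); lra]).
    auto. }
  set (pk := fun n => proj1_sig (constructive_indefinite_description _ (Hex n))).
  assert (Pk : forall n, (forall y, 0 <= fst (pk n) y) /\ Dt b c (re (fst (pk n))) /\
     N (re (fst (pk n))) <= / 2 ^ (S n) /\ fst (pk n) (snd (pk n)) = INR n + 1)
    by (intros n; unfold pk; apply proj2_sig).
  destruct (bump_series Hconn (fun n => fst (pk n))) as [s [Ds Hs]]; try (intros; apply Pk).
  destruct (Hcc _ Ds) as [M0 HM0].
  destruct (INR_unbounded M0) as [n Hn].
  specialize (HM0 (snd (pk n))). unfold re in HM0. rewrite Cabs_re in HM0.
  specialize (Hs n (snd (pk n))). destruct (Pk n) as (_ & _ & _ & Hx).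
  pose proof (Rle_abs (s (snd (pk n)))). lra.
Qed.

End Embedding.

(** * Clamping: functions vanishing at infinity lie in D~_o *)

(* Clamping of real and imaginary parts to [-e, e]: a contraction onto a box. *)
Definition clamp (e t : R) : R := Rmax (- e) (Rmin e t).
Definition Cl (e : R) (z : Cplx) : Cplx := (clamp e (fst z), clamp e (snd z)).

Lemma clamp_lip e t s : 0 <= e -> Rabs (clamp e t - clamp e s) <= Rabs (t - s).
Proof.
  intros He. unfold clamp, Rmax, Rmin.
  repeat (destruct (Rle_dec _ _)); unfold Rabs; repeat destruct (Rcase_abs _); lra.
Qed.
Lemma clamp_bd e t : 0 <= e -> Rabs (clamp e t) <= e.
Proof.
  intros He. unfold clamp, Rmax, Rmin.
  repeat (destruct (Rle_dec _ _)); unfold Rabs; repeat destruct (Rcase_abs _); lra.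
Qed.
Lemma clamp_abs e t : 0 <= e -> Rabs (clamp e t) <= Rabs t.
Proof.
  intros He. unfold clamp, Rmax, Rmin.
  repeat (destruct (Rle_dec _ _)); unfold Rabs; repeat destruct (Rcase_abs _); lra.
Qed.
Lemma clamp_id e t : Rabs t <= e -> clamp e t = t.
Proof.
  intros He. unfold clamp, Rmax, Rmin. unfold Rabs in He; destruct (Rcase_abs t);
  repeat (destruct (Rle_dec _ _)); lra.
Qed.

Lemma abs_le_sq a e : Rabs a <= e -> a * a <= e * e.
Proof. intros H. pose proof (Rabs_pos a). pose proof (sq_abs_le a (Rabs a) ltac:(rewrite Rabs_Rabsolu; lra)). nra. Qed.

Lemma Cl_lip e z w : 0 <= e -> Cnorm2 (Csub (Cl e z) (Cl e w)) <= Cnorm2 (Csub z w).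
Proof.
  intros He. destruct z as [z1 z2], w as [w1 w2]. unfold Cl, Cnorm2, Csub, Cadd, Copp; simpl.
  pose proof (sq_abs_le _ _ (clamp_lip e z1 w1 He)). pose proof (sq_abs_le _ _ (clamp_lip e z2 w2 He)).
  unfold Rminus in *. lra.
Qed.

Lemma Cl_small e z w : 0 <= e -> Cnorm2 (Csub (Cl e z) (Cl e w)) <= 8 * (e * e).
Proof.
  intros He. destruct z as [z1 z2], w as [w1 w2]. unfold Cl, Cnorm2, Csub, Cadd, Copp; simpl.
  assert (H : forall a b, Rabs (clamp e a + - clamp e b) <= 2 * e).
  { intros a b. eapply Rle_trans; [apply Rabs_triang|]. rewrite Rabs_Ropp.
    pose proof (clamp_bd e a He); pose proof (clamp_bd e b He); lra. }
  pose proof (abs_le_sq _ _ (H z1 w1)). pose proof (abs_le_sq _ _ (H z2 w2)). nra.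
Qed.

Lemma Cl_pt e z : 0 <= e -> Cnorm2 (Cl e z) <= Cnorm2 z /\ Cnorm2 (Cl e z) <= 2 * (e * e).
Proof.
  intros He. destruct z as [z1 z2]. unfold Cl, Cnorm2; simpl.
  pose proof (sq_abs_le _ _ (clamp_abs e z1 He)). pose proof (sq_abs_le _ _ (clamp_abs e z2 He)).
  pose proof (abs_le_sq _ _ (clamp_bd e z1 He)). pose proof (abs_le_sq _ _ (clamp_bd e z2 He)).
  split; lra.
Qed.

Lemma Cl_id e z : Cabs z <= e -> Cl e z = z.
Proof.
  intros H. pose proof (fst_le_Cabs z). pose proof (snd_le_Cabs z).
  destruct z as [z1 z2]; unfold Cl; simpl in *. rewrite !clamp_id by lra. auto.
Qed.

Lemma small_square d A : 0 < d -> 0 < A -> exists e, 0 < e /\ e * e * A <= d.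
Proof.
  intros Hd HA. exists (Rmin 1 (d / A)).
  assert (H1 : Rmin 1 (d / A) <= 1) by apply Rmin_l.
  assert (H2 : Rmin 1 (d / A) <= d / A) by apply Rmin_r.
  assert (H0 : 0 < Rmin 1 (d / A)) by (apply Rmin_glb_lt; [lra| apply Rdiv_lt_0_compat; auto]).
  split; auto.
  apply (Rmult_le_compat_r A) in H2; [|lra].
  replace (d / A * A) with d in H2 by (field; lra). nra.
Qed.

Section Clamping.
Context {X : Type} (b : X -> X -> R) (c : X -> R) (o : X) (Hw : weighted_graph b c).

(* Clamping at a small height e makes the norm small: on a finite set of
   edges and vertices carrying all but d of the energy of u the clamped terms
   are O(e^2), and off it they are dominated by those of u. *)
Lemma clamp_small u : Dt b c u -> forall eta, 0 < eta ->
  exists e, 0 < e /\ normo b c o (fun x => Cl e (u x)) < eta.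
Proof.
  intros [eu ku] eta Heta.
  set (d := eta * eta / 8).
  assert (Hd : 0 < d) by (unfold d; nra).
  destruct (dominated_tail (edge_term b u) d (edge_nonneg b c Hw u) eu Hd) as [l0 T0].
  destruct (dominated_tail (kill_term c u) d (kill_nonneg b c Hw u) ku Hd) as [l1 T1].
  set (B0 := fsum (fun p : X * X => b (fst p) (snd p)) l0).
  set (B1 := fsum c l1).
  assert (HB0 : 0 <= B0) by (apply fsum_nonneg; intros; apply (b_nonneg b c Hw)).
  assert (HB1 : 0 <= B1) by (apply fsum_nonneg; intros; apply (c_nonneg b c Hw)).
  destruct (small_square d (4 * B0 + 2 * B1 + 2) Hd ltac:(lra)) as [e [He Hee]].
  exists e. split; auto.
  set (v := fun x => Cl e (u x)).
  destruct (T0 (edge_term b v)) as [sv tv].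
  { intros p. split; [apply (edge_nonneg b c Hw)|]. unfold edge_term, v.
    apply Rmult_le_compat_l; [apply (b_nonneg b c Hw)| apply Cl_lip; lra]. }
  destruct (T1 (kill_term c v)) as [kv tk].
  { intros p. split; [apply (kill_nonneg b c Hw)|]. unfold kill_term, v.
    apply Rmult_le_compat_l; [apply (c_nonneg b c Hw)| apply Cl_pt; lra]. }
  assert (F0 : fsum (edge_term b v) l0 <= 8 * (e * e) * B0).
  { unfold B0. rewrite <- fsum_scal. apply fsum_le. intros p. unfold edge_term, v.
    pose proof (Cl_small e (u (fst p)) (u (snd p)) (Rlt_le _ _ He)).
    pose proof (b_nonneg b c Hw (fst p) (snd p)). nra. }
  assert (F1 : fsum (kill_term c v) l1 <= 2 * (e * e) * B1).
  { unfold B1. rewrite <- fsum_scal. apply fsum_le. intros p. unfold kill_term, v.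
    pose proof (Cl_pt e (u p) (Rlt_le _ _ He)). pose proof (c_nonneg b c Hw p). nra. }
  assert (Fo : Cnorm2 (v o) <= 2 * (e * e)) by (apply Cl_pt; lra).
  assert (Hsq : normo b c o v * normo b c o v < eta * eta).
  { rewrite normo_sq by auto. unfold Qt. unfold d in *. nra. }
  pose proof (normo_nonneg b c o v). nra.
Qed.

(* If u vanishes at infinity, u minus its clamp at height e is finitely
   supported, and the clamp itself is small. *)
Lemma vanishing_in_Dto u : Dt b c u -> vanishes_at_infinity u -> Dto b c o u.
Proof.
  intros Du Hv. split; auto. intros eta Heta.
  destruct (clamp_small u Du eta Heta) as [e [He Hsmall]].
  destruct (Hv e He) as [l Hl].
  exists (fun x => Csub (u x) (Cl e (u x))). split.
  - exists l. intros x Hx. rewrite Cl_id by auto. cring.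
  - replace (fsub u (fun x => Csub (u x) (Cl e (u x)))) with (fun x => Cl e (u x)); auto.
    extensionality x. unfold fsub. cring.
Qed.

End Clamping.

(* Part (I): D~_o = D~ ∩ c_0.  The forward inclusion uses the bounded
   embedding: |u - phi| <= C ||u - phi||_o uniformly, and phi = 0 off a
   finite set. *)
Lemma Dto_iff_vanishing {X : Type} (b : X -> X -> R) (c : X -> R) (o : X) :
  weighted_graph b c -> connected b -> canonically_compactifiable b c ->
  forall u, Dto b c o u <-> Dt b c u /\ vanishes_at_infinity u.
Proof.
  intros Hw Hconn Hcc u. split; [|intros [Du Hv]; apply vanishing_in_Dto; auto].
  intros [Du Happ]. split; auto. intros e He.
  destruct (embedding b c o Hw Hconn Hcc) as [C [HC Hemb]].
  destruct (Happ (e / (C + 1)) ltac:(apply Rdiv_lt_0_compat; lra)) as [phi [[l Hl] Hn]].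
  exists l. intros x Hx.
  assert (Dphi : Dt b c phi) by (apply (Dt_finsupp b c Hw); exists l; auto).
  pose proof (Hemb _ (Dt_sub b c Hw u phi Du Dphi) x) as Hux.
  replace (fsub u phi x) with (u x) in Hux by (unfold fsub; rewrite (Hl x Hx); cring).
  pose proof (normo_nonneg b c o (fsub u phi)).
  assert (C * normo b c o (fsub u phi) <= C * (e / (C + 1))) by (apply Rmult_le_compat_l; lra).
  assert (C * (e / (C + 1)) <= e).
  { apply (Rmult_le_reg_l (C + 1)); [lra|]. field_simplify; [|lra]. nra. }
  lra.
Qed.

Theorem mainTheorem11 (X : Type) (b : X -> X -> R) (c : X -> R) (o : X) :
  countably_infinite X -> weighted_graph b c -> connected b ->
  canonically_compactifiable b c ->
  forall u : X -> Cplx,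
    Dto b c o u <->
    (Dt b c u /\ forall gam, in_boundary b c gam -> hat u gam = C0).
Proof.
  intros _ Hw Hconn Hcc u.
  rewrite (Dto_iff_vanishing b c o Hw Hconn Hcc u).
  split; intros [Du H]; split; auto.
  - intros gam Hgam. apply (boundary_vanishes b c Hw Hcc gam Hgam); auto.
    apply Aplus_Dt; auto.
  - apply (vanishing_of_boundary b c); auto. apply Aplus_Dt; auto.
Qed.
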